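(* In the Euclidean plane or space, let ${\rm O},{\rm A},{\rm B}$ be three distinct points such that ${\rm A}$ and ${\rm B}$ lie on a same ray from ${\rm O}$. For every $T>0$ there is a unique direct Keplerian arc around ${\rm O}$ going from ${\rm A}$ to ${\rm B}$ with elapsed time $T$, and this arc is rectilinear.
   Context: Units are normalized so that the Kepler problem with fixed center ${\rm O}$ is $\ddot q=-q/|q|^3$. A Keplerian arc around ${\rm O}$ from ${\rm A}$ to ${\rm B}$ is a solution restricted to a compact time interval $[t_{\rm A},t_{\rm B}]$, $t_{\rm A}<t_{\rm B}$, with $q(t_{\rm A})={\rm A}$, $q(t_{\rm B})={\rm B}$; elapsed time $t_{\rm B}-t_{\rm A}$. Rectilinear motions are extended after collision with ${\rm O}$ (bounce back along the same ray with the same energy). An arc is indirect if its convex hull contains ${\rm O}$, direct otherwise. *)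

From Stdlib Require Import Reals Lra.
Open Scope R_scope.

(* Points of the Euclidean space R^d are encoded as functions nat -> R whose
   coordinates of index >= d vanish. *)
Definition pt := nat -> R.

Definition inR (d : nat) (x : pt) : Prop := forall i, (d <= i)%nat -> x i = 0.

Fixpoint sumR (n : nat) (f : nat -> R) : R :=
  match n with
  | O => 0
  | S m => sumR m f + f m
  end.

Definition dot (d : nat) (x y : pt) : R := sumR d (fun i => x i * y i).
Definition norm (d : nat) (x : pt) : R := sqrt (dot d x x).
Definition vsub (x y : pt) : pt := fun i => x i - y i.

Definition eqpt (d : nat) (x y : pt) : Prop := forall i, (i < d)%nat -> x i = y i.

(* Keplerian arc around the center O, from time tA to time tB: the restriction
   to [tA,tB] of a (generalized) solution of  q'' = -(q-O)/|q-O|^3  defined on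
   an open interval (a,b) containing [tA,tB].  Away from collisions it is a
   classical C^2 solution (v is the velocity); collision times are isolated, the
   energy |v|^2/2 - 1/|q-O| is the same at all non-collision times, and if a
   collision occurs the whole motion stays on a single ray from O
   (rectilinear motion bouncing back along the same ray with the same energy). *)
Definition KeplerArc (d : nat) (O : pt) (q : R -> pt) (tA tB : R) : Prop :=
  tA < tB /\
  (forall t, inR d (q t)) /\
  exists (a b : R) (v : R -> pt) (h : R),
    a < tA /\ tB < b /\
    (forall t, a < t < b -> forall i, (i < d)%nat ->
        continuity_pt (fun s => q s i) t) /\
    (forall t, a < t < b -> 0 < norm d (vsub (q t) O) ->
       forall i, (i < d)%nat ->
         derivable_pt_lim (fun s => q s i) t (v t i) /\
         derivable_pt_lim (fun s => v s i) t
           (- (q t i - O i) / (norm d (vsub (q t) O)) ^ 3)) /\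
    (forall t, a < t < b -> 0 < norm d (vsub (q t) O) ->
       dot d (v t) (v t) / 2 - 1 / norm d (vsub (q t) O) = h) /\
    (forall t0, a < t0 < b -> norm d (vsub (q t0) O) = 0 ->
       exists eps, 0 < eps /\
         forall t, 0 < Rabs (t - t0) < eps -> 0 < norm d (vsub (q t) O)) /\
    ((exists t0, a < t0 < b /\ norm d (vsub (q t0) O) = 0) ->
       exists u : pt, inR d u /\ norm d u = 1 /\
         forall t, a < t < b -> exists lam, 0 <= lam /\
           forall i, (i < d)%nat -> q t i = O i + lam * u i).

Definition InArcHull (d : nat) (q : R -> pt) (tA tB : R) (x : pt) : Prop :=
  exists (n : nat) (w : nat -> R) (ts : nat -> R),
    (forall k, (k < n)%nat -> 0 <= w k /\ tA <= ts k <= tB) /\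
    sumR n w = 1 /\
    forall i, (i < d)%nat -> sumR n (fun k => w k * q (ts k) i) = x i.

Definition DirectArc (d : nat) (O : pt) (q : R -> pt) (tA tB : R) : Prop :=
  ~ InArcHull d q tA tB O.

Definition Rectilinear (d : nat) (O : pt) (q : R -> pt) (tA tB : R) : Prop :=
  exists u : pt, inR d u /\ 0 < norm d u /\
    forall t, tA <= t <= tB -> exists lam : R,
      forall i, (i < d)%nat -> q t i = O i + lam * u i.

Definition ArcFromTo (d : nat) (O A B : pt) (q : R -> pt) (tA T : R) : Prop :=
  KeplerArc d O q tA (tA + T) /\ eqpt d (q tA) A /\ eqpt d (q (tA + T)) B.

(* A direct arc never passes through O, so it is a classical solution there and its angular
   momentum l is conserved.  If l <> 0, the function t |-> <q t - O, l x (A - O)> vanishes at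
   both ends with positive slope, hence crosses zero downwards at some time where q - O is a
   negative multiple of A - O, which puts O in the convex hull.  So l = 0 and the arc runs
   along the ray OA, its distance r to O solving r'' = -1/r^2, for which a maximum principle
   gives uniqueness of the two-point problem.
   For existence (say |OA| < |OB|), outward motions of energy h > -3/(4|OB|) take the time
   int_{|OA|}^{|OB|} dr / sqrt (2 (h + 1/r)), which is continuous in h and tends to 0, while
   elliptic motions r = a (1 - cos u), t = a^(3/2) (u - sin u) passing the apocenter take
   arbitrarily long; both families contain the motion of energy -1/(2|OB|), and the
   intermediate value theorem covers every T > 0. *)

From Stdlib Require Import Reals Lra Lia Ranalysis5 ClassicalEpsilon FunctionalExtensionality.
From Coquelicot Require Import Coquelicot.
Open Scope R_scope.

Definition sqnorm3 (a b c : R) := a * a + b * b + c * c.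

Lemma sqnorm3_ge0 a b c : 0 <= sqnorm3 a b c.
Proof. unfold sqnorm3; nra. Qed.

Lemma sqnorm3_eq0 a b c : sqnorm3 a b c = 0 -> a = 0 /\ b = 0 /\ c = 0.
Proof. unfold sqnorm3; intros; repeat split; nra. Qed.

Lemma sqnorm3_pos_of_sqrt a b c : 0 < sqrt (sqnorm3 a b c) -> 0 < sqnorm3 a b c.
Proof.
  intros H. destruct (sqnorm3_ge0 a b c) as [H'|H']; auto.
  rewrite <- H', sqrt_0 in H; lra.
Qed.

Section Coordinates.
Variable d : nat.
Hypothesis Hd : (d = 2 \/ d = 3)%nat.

Lemma dot_coords x y : inR d x ->
  dot d x y = x 0%nat * y 0%nat + x 1%nat * y 1%nat + x 2%nat * y 2%nat.
Proof.
  intros Hx; destruct Hd as [-> | ->]; unfold dot; simpl.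
  - rewrite (Hx 2%nat) by lia; ring.
  - ring.
Qed.

Lemma norm_coords x : inR d x -> norm d x = sqrt (sqnorm3 (x 0%nat) (x 1%nat) (x 2%nat)).
Proof. intros Hx; unfold norm; rewrite dot_coords by exact Hx; reflexivity. Qed.

Lemma inR_vsub x y : inR d x -> inR d y -> inR d (vsub x y).
Proof. intros Hx Hy i Hi; unfold vsub; rewrite Hx, Hy by exact Hi; ring. Qed.

Lemma coords3_of_lt_d (P : R -> R -> Prop) (x y : pt) : P 0 0 -> inR d x -> inR d y ->
  (forall i, (i < d)%nat -> P (x i) (y i)) -> forall i, (i < 3)%nat -> P (x i) (y i).
Proof.
  intros H0 Hx Hy H i Hi; destruct (Nat.lt_ge_cases i d) as [Hlt | Hge]; auto.
  rewrite Hx, Hy by exact Hge; exact H0.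
Qed.

End Coordinates.

Lemma dl_eq (f : R -> R) x l l' : derivable_pt_lim f x l -> l = l' -> derivable_pt_lim f x l'.
Proof. intros H ->; exact H. Qed.

Lemma dl_mult_const (f : R -> R) c x f' : derivable_pt_lim f x f' ->
  derivable_pt_lim (fun t => f t * c) x (f' * c).
Proof.
  intros H; eapply dl_eq;
    [apply (derivable_pt_lim_mult f (fun _ => c)); [exact H | apply derivable_pt_lim_const] | ring].
Qed.

Lemma dl_shift (f : R -> R) a t l : derivable_pt_lim f (a + t) l ->
  derivable_pt_lim (fun s => f (a + s)) t l.
Proof.
  intros H.
  assert (Ha : derivable_pt_lim (fun s => a + s) t 1)
    by (eapply dl_eq; [apply derivable_pt_lim_plus;
                          [apply derivable_pt_lim_const | apply derivable_pt_lim_id] | ring]).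
  eapply dl_eq; [exact (derivable_pt_lim_comp _ f t 1 l Ha H) | ring].
Qed.

Lemma dl_reflect (f : R -> R) a t l : derivable_pt_lim f (a - t) l ->
  derivable_pt_lim (fun s => f (a - s)) t (- l).
Proof.
  intros H.
  assert (Ha : derivable_pt_lim (fun s => a - s) t (-1))
    by (eapply dl_eq; [apply derivable_pt_lim_minus;
                          [apply derivable_pt_lim_const | apply derivable_pt_lim_id] | ring]).
  eapply dl_eq; [exact (derivable_pt_lim_comp _ f t (-1) l Ha H) | ring].
Qed.

Lemma continuity_pt_cst (c x : R) : continuity_pt (fun _ => c) x.
Proof. apply continuity_pt_const; intros ? ?; reflexivity. Qed.

Lemma continuity_pt_of_dl (f : R -> R) x l : derivable_pt_lim f x l -> continuity_pt f x.
Proof. intros H; apply derivable_continuous_pt; exists l; exact H. Qed.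

Lemma continuity_pt_locally_pos (f : R -> R) x : continuity_pt f x -> 0 < f x ->
  exists del, 0 < del /\ forall y, Rabs (y - x) < del -> 0 < f y.
Proof.
  intros Hc Hx; destruct (Hc (f x) Hx) as [del [Hdel Hball]].
  exists del; split; [exact Hdel |]; intros y Hy.
  destruct (Req_dec y x) as [-> | Hne]; [exact Hx |].
  assert (Hfy : Rabs (f y - f x) < f x)
    by (apply Hball; split; [split; [exact I | intros E; apply Hne, eq_sym, E] | exact Hy]).
  apply Rabs_def2 in Hfy; lra.
Qed.

Lemma continuity_pt_locally_neg (f : R -> R) x : continuity_pt f x -> f x < 0 ->
  exists del, 0 < del /\ forall y, Rabs (y - x) < del -> f y < 0.
Proof.
  intros Hc Hx.
  destruct (continuity_pt_locally_pos (fun y => - f y) x) as [del [Hdel H]].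
  - apply continuity_pt_opp, Hc.
  - lra.
  - exists del; split; [exact Hdel |]; intros y Hy; specialize (H y Hy); simpl in H; lra.
Qed.

Lemma derivable_pt_lim_0_const (f : R -> R) a b :
  (forall c, a <= c <= b -> derivable_pt_lim f c 0) -> forall x, a <= x <= b -> f x = f a.
Proof.
  intros Hd x Hx; destruct (Req_dec x a) as [-> | Hne]; [reflexivity |].
  destruct (MVT_cor2 f (fun _ => 0) a x) as [c [Hc _]]; [lra | intros c Hc; apply Hd; lra | lra].
Qed.

Lemma increasing_of_dl_pos (f f' : R -> R) a b :
  (forall c, a <= c <= b -> derivable_pt_lim f c (f' c)) -> (forall c, a <= c <= b -> 0 < f' c) ->
  forall x y, a <= x -> x < y -> y <= b -> f x < f y.
Proof.
  intros Hd Hp x y Hax Hxy Hyb.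
  destruct (MVT_cor2 f f' x y Hxy) as [c [Hc Hcxy]]; [intros c Hc; apply Hd; lra |].
  assert (0 < f' c) by (apply Hp; lra); nra.
Qed.

Lemma exists_pos_lt2 a b : 0 < a -> 0 < b -> exists h, 0 < h < a /\ h < b.
Proof.
  intros Ha Hb; exists (Rmin a b / 2).
  assert (0 < Rmin a b) by (apply Rmin_pos; assumption).
  pose proof (Rmin_l a b); pose proof (Rmin_r a b); lra.
Qed.

Lemma dl_pos_right (f : R -> R) m l : derivable_pt_lim f m l -> 0 < l -> f m = 0 ->
  exists del, 0 < del /\ forall h, 0 < h < del -> 0 < f (m + h).
Proof.
  intros Hd Hl H0; destruct (Hd l Hl) as [[del Hdel] Hq]; exists del; split; [exact Hdel |].
  intros h Hh; assert (Hq' : Rabs ((f (m + h) - f m) / h - l) < l)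
    by (apply Hq; [lra | rewrite Rabs_pos_eq; simpl; lra]).
  rewrite H0, Rminus_0_r in Hq'; apply Rabs_def2 in Hq'.
  replace (f (m + h)) with (f (m + h) / h * h) by (field; lra).
  apply Rmult_lt_0_compat; lra.
Qed.

Lemma dl_neg_left (f : R -> R) m l : derivable_pt_lim f m l -> 0 < l -> f m = 0 ->
  exists del, 0 < del /\ forall h, 0 < h < del -> f (m - h) < 0.
Proof.
  intros Hd Hl H0; destruct (Hd l Hl) as [[del Hdel] Hq]; exists del; split; [exact Hdel |].
  intros h Hh; assert (Hq' : Rabs ((f (m + - h) - f m) / - h - l) < l)
    by (apply Hq; [lra | rewrite Rabs_Ropp, Rabs_pos_eq; simpl; lra]).
  rewrite H0, Rminus_0_r in Hq'; apply Rabs_def2 in Hq'.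
  replace (f (m - h)) with (- (f (m + - h) / - h * h))
    by (replace (m - h) with (m + - h) by ring; field; lra).
  assert (0 < f (m + - h) / - h * h) by (apply Rmult_lt_0_compat; lra); lra.
Qed.

Lemma dl_interior_max (g : R -> R) m l a b : a < m < b -> derivable_pt_lim g m l ->
  (forall x, a < x < b -> g x <= g m) -> l = 0.
Proof.
  intros Hm Hd Hmax.
  destruct (Rtotal_order l 0) as [Hl | [Hl | Hl]]; auto; exfalso.
  - destruct (dl_neg_left (fun x => g m - g x) m (- l)) as [del [Hdel Hneg]]; [| lra | ring |].
    { eapply dl_eq; [apply derivable_pt_lim_minus; [apply derivable_pt_lim_const | exact Hd] |].
      ring. }
    destruct (exists_pos_lt2 del (m - a)) as [h [Hh Hh']]; [lra | lra |].
    assert (g m - g (m - h) < 0) by (apply Hneg; lra).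
    assert (g (m - h) <= g m) by (apply Hmax; lra); lra.
  - destruct (dl_pos_right (fun x => g x - g m) m l) as [del [Hdel Hpos]]; [| lra | ring |].
    { eapply dl_eq; [apply derivable_pt_lim_minus; [exact Hd | apply derivable_pt_lim_const] |].
      ring. }
    destruct (exists_pos_lt2 del (b - m)) as [h [Hh Hh']]; [lra | lra |].
    assert (0 < g (m + h) - g m) by (apply Hpos; lra).
    assert (g (m + h) <= g m) by (apply Hmax; lra); lra.
Qed.

Lemma increases_after_critical_point (g G : R -> R) m b l : m < b ->
  (forall c, m <= c <= b -> derivable_pt_lim g c (G c)) ->
  derivable_pt_lim G m l -> 0 < l -> G m = 0 ->
  exists x, m < x <= b /\ g m < g x.
Proof.
  intros Hmb Hg HG Hl HG0.
  destruct (dl_pos_right G m l HG Hl HG0) as [del [Hdel Hpos]].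
  destruct (exists_pos_lt2 del (b - m)) as [h [Hh Hh']]; [lra | lra |].
  exists (m + h); split; [lra |].
  destruct (MVT_cor2 g G m (m + h)) as [c [Hc Hcm]]; [lra | intros c Hc; apply Hg; lra |].
  assert (0 < G c) by (replace c with (m + (c - m)) by ring; apply Hpos; lra); nra.
Qed.

Lemma last_zero (f : R -> R) p m : p < m -> (forall t, p <= t <= m -> continuity_pt f t) ->
  0 < f p -> f m < 0 ->
  exists ts, p < ts < m /\ f ts = 0 /\ forall t, ts < t <= m -> f t < 0.
Proof.
  intros Hpm Hc Hp Hm.
  set (E := fun t => p <= t <= m /\ 0 <= f t).
  destruct (completeness E) as [ts [Hub Hlub]].
  { exists m; intros t [Ht _]; lra. }
  { exists p; split; lra. }
  assert (Hpts : p <= ts) by (apply Hub; split; lra).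
  assert (Htsm : ts <= m) by (apply Hlub; intros t [Ht _]; lra).
  assert (Hafter : forall t, ts < t <= m -> f t < 0).
  { intros t Ht; destruct (Rlt_or_le (f t) 0) as [| Hge]; auto.
    assert (t <= ts) by (apply Hub; split; [lra | exact Hge]); lra. }
  assert (Hge : 0 <= f ts).
  { destruct (Rle_or_lt 0 (f ts)) as [| Hlt]; auto; exfalso.
    destruct (continuity_pt_locally_neg f ts (Hc ts (conj Hpts Htsm)) Hlt) as [del [Hdel Hneg]].
    assert (ts <= ts - del / 2); [| lra].
    apply Hlub; intros t [Ht Hft]; destruct (Rle_or_lt t (ts - del / 2)) as [| Hgt]; auto.
    assert (t <= ts) by (apply Hub; split; auto).
    assert (f t < 0) by (apply Hneg; rewrite Rabs_left1; lra); lra. }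
  assert (Hts_m : ts < m) by (destruct (Req_dec ts m) as [-> |]; lra).
  assert (Hle : f ts <= 0).
  { destruct (Rle_or_lt (f ts) 0) as [| Hgt]; auto; exfalso.
    destruct (continuity_pt_locally_pos f ts (Hc ts (conj Hpts Htsm)) Hgt) as [del [Hdel Hpos]].
    destruct (exists_pos_lt2 del (m - ts)) as [h [Hh Hh']]; [lra | lra |].
    assert (0 < f (ts + h)) by (apply Hpos; rewrite Rabs_pos_eq; lra).
    assert (f (ts + h) < 0) by (apply Hafter; lra); lra. }
  exists ts; split; [split; [destruct (Req_dec p ts) as [<- |]; lra | exact Hts_m] |].
  split; [lra | exact Hafter].
Qed.

Lemma exists_down_zero (f f' : R -> R) a b : a < b ->
  (forall t, a <= t <= b -> derivable_pt_lim f t (f' t)) ->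
  f a = 0 -> f b = 0 -> 0 < f' a -> 0 < f' b ->
  exists ts, a < ts < b /\ f ts = 0 /\ f' ts <= 0.
Proof.
  intros Hab Hd Ha Hb Ha' Hb'.
  destruct (dl_pos_right f a (f' a)) as [d1 [Hd1 Hr]]; [apply Hd; lra | exact Ha' | exact Ha |].
  destruct (dl_neg_left f b (f' b)) as [d2 [Hd2 Hl]]; [apply Hd; lra | exact Hb' | exact Hb |].
  destruct (exists_pos_lt2 (Rmin d1 d2) ((b - a) / 2)) as [h [Hh Hh']];
    [apply Rmin_pos; assumption | lra |].
  pose proof (Rmin_l d1 d2); pose proof (Rmin_r d1 d2).
  destruct (last_zero f (a + h) (b - h)) as [ts [Hts [Hz Hafter]]].
  { lra. }
  { intros t Ht; apply (continuity_pt_of_dl f t (f' t)), Hd; lra. }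
  { apply Hr; lra. }
  { apply Hl; lra. }
  exists ts; split; [lra | split; [exact Hz |]].
  destruct (Rle_or_lt (f' ts) 0) as [| Hpos]; auto; exfalso.
  destruct (dl_pos_right f ts (f' ts) (Hd ts ltac:(lra)) Hpos Hz) as [del [Hdel Hp]].
  destruct (exists_pos_lt2 del (b - h - ts)) as [k [Hk Hk']]; [lra | lra |].
  assert (0 < f (ts + k)) by (apply Hp; lra).
  assert (f (ts + k) < 0) by (apply Hafter; lra); lra.
Qed.

(** * The radial Kepler equation *)

Definition radial_motion (r w : R -> R) (t : R) : Prop :=
  0 < r t /\ derivable_pt_lim r t (w t) /\ derivable_pt_lim w t (- / (r t) ^ 2).

Lemma radial_motion_shift (r w : R -> R) a t : radial_motion r w (a + t) ->
  radial_motion (fun x => r (a + x)) (fun x => w (a + x)) t.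
Proof. intros (Hr & Hd & Hw); split; [exact Hr | split; apply dl_shift; assumption]. Qed.

(* At an interior maximum of r2 - r1 > 0 we would have (r2 - r1)'' = 1/r1^2 - 1/r2^2 > 0. *)
Lemma radial_bvp_le (r1 r2 w1 w2 : R -> R) T : 0 < T ->
  (forall s, 0 <= s <= T -> radial_motion r1 w1 s) ->
  (forall s, 0 <= s <= T -> radial_motion r2 w2 s) ->
  r1 0 = r2 0 -> r1 T = r2 T -> forall s, 0 <= s <= T -> r2 s <= r1 s.
Proof.
  intros HT H1 H2 E0 ET s0 Hs0.
  destruct (Rle_or_lt (r2 s0) (r1 s0)) as [| Hlt]; auto; exfalso.
  set (g := fun s => r2 s - r1 s).
  assert (Hg : forall s, 0 <= s <= T -> derivable_pt_lim g s (w2 s - w1 s))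
    by (intros s Hs; apply derivable_pt_lim_minus; [apply H2 | apply H1]; exact Hs).
  destruct (continuity_ab_maj g 0 T) as [m [Hmax Hm]]; [lra | |].
  { intros c Hc; exact (continuity_pt_of_dl _ _ _ (Hg c Hc)). }
  assert (Hgm : g s0 <= g m) by (apply Hmax; exact Hs0); unfold g in Hgm.
  assert (Hmi : 0 < m < T)
    by (split; [destruct (Req_dec m 0) as [-> |] | destruct (Req_dec m T) as [-> |]]; lra).
  assert (Hcrit : w2 m - w1 m = 0)
    by (apply (dl_interior_max g m _ 0 T Hmi); [apply Hg; lra | intros x Hx; apply Hmax; lra]).
  destruct (H1 m ltac:(lra)) as [Hr1 [_ Hw1]]; destruct (H2 m ltac:(lra)) as [Hr2 [_ Hw2]].
  assert (Hconv : 0 < - / (r2 m) ^ 2 - - / (r1 m) ^ 2).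
  { assert (/ (r2 m) ^ 2 < / (r1 m) ^ 2); [| lra].
    apply Rinv_lt_contravar; [apply Rmult_lt_0_compat; apply pow_lt; lra | simpl; nra]. }
  destruct (increases_after_critical_point g (fun s => w2 s - w1 s) m T _ ltac:(lra)
              ltac:(intros c Hc; apply Hg; lra) (derivable_pt_lim_minus _ _ m _ _ Hw2 Hw1)
              Hconv Hcrit)
    as [x [Hx Hgx]].
  assert (g x <= g m) by (apply Hmax; lra); lra.
Qed.

Lemma radial_bvp_unique (r1 r2 w1 w2 : R -> R) T : 0 < T ->
  (forall s, 0 <= s <= T -> radial_motion r1 w1 s) ->
  (forall s, 0 <= s <= T -> radial_motion r2 w2 s) ->
  r1 0 = r2 0 -> r1 T = r2 T -> forall s, 0 <= s <= T -> r1 s = r2 s.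
Proof.
  intros HT H1 H2 E0 ET s Hs; apply Rle_antisym.
  - exact (radial_bvp_le r2 r1 w2 w1 T HT H2 H1 (eq_sym E0) (eq_sym ET) s Hs).
  - exact (radial_bvp_le r1 r2 w1 w2 T HT H1 H2 E0 ET s Hs).
Qed.

Definition radial_energy (r w : R -> R) (t : R) := w t * w t / 2 - 1 / r t.

Lemma radial_energy_const (r w : R -> R) a b :
  (forall t, a < t < b -> radial_motion r w t) ->
  forall t t0, a < t < b -> a < t0 < b -> radial_energy r w t = radial_energy r w t0.
Proof.
  intros Hsol.
  assert (HE : forall t, a < t < b -> derivable_pt_lim (radial_energy r w) t 0).
  { intros t Ht; destruct (Hsol t Ht) as (P & Q & U); unfold radial_energy.
    eapply dl_eq; [apply derivable_pt_lim_minus |].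
    - apply (derivable_pt_lim_div (fun t => w t * w t) (fun _ => 2));
        [apply derivable_pt_lim_mult; eassumption | apply derivable_pt_lim_const | lra].
    - apply (derivable_pt_lim_div (fun _ => 1) r);
        [apply derivable_pt_lim_const | eassumption | lra].
    - unfold Rsqr; field; lra. }
  assert (Hle : forall t t0, a < t <= t0 -> t0 < b -> radial_energy r w t0 = radial_energy r w t)
    by (intros t t0 Ht Ht0; apply (derivable_pt_lim_0_const _ t t0);
        [intros c Hc; apply HE |]; lra).
  intros t t0 Ht Ht0; destruct (Rle_or_lt t t0); [symmetry |]; apply Hle; lra.
Qed.

(** * Angular momentum *)

Lemma momentum_component_conserved (xi xj vi vj : R -> R) t K : K <> 0 ->
  derivable_pt_lim xi t (vi t) -> derivable_pt_lim xj t (vj t) ->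
  derivable_pt_lim vi t (- xi t / K) -> derivable_pt_lim vj t (- xj t / K) ->
  derivable_pt_lim (fun s => xi s * vj s - xj s * vi s) t 0.
Proof.
  intros HK Hxi Hxj Hvi Hvj.
  eapply dl_eq; [apply derivable_pt_lim_minus; apply derivable_pt_lim_mult; eassumption |].
  field; exact HK.
Qed.

Lemma dl_div_norm (xi N : R -> R) t vi p : 0 < N t ->
  derivable_pt_lim xi t vi -> derivable_pt_lim N t (p / N t) ->
  derivable_pt_lim (fun s => xi s / N s) t ((vi * (N t * N t) - p * xi t) / N t ^ 3).
Proof.
  intros HN Hxi HNd.
  eapply dl_eq; [apply (derivable_pt_lim_div xi N); [exact Hxi | exact HNd | lra] |].
  unfold Rsqr; field; lra.
Qed.

Lemma parallel_of_orthogonal y0 y1 y2 c0 c1 c2 l0 l1 l2 :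
  0 < sqnorm3 l0 l1 l2 -> 0 < sqnorm3 c0 c1 c2 ->
  c0 * l0 + c1 * l1 + c2 * l2 = 0 -> y0 * l0 + y1 * l1 + y2 * l2 = 0 ->
  y0 * (l1 * c2 - l2 * c1) + y1 * (l2 * c0 - l0 * c2) + y2 * (l0 * c1 - l1 * c0) = 0 ->
  exists lam, y0 = lam * c0 /\ y1 = lam * c1 /\ y2 = lam * c2.
Proof.
  intros Hl Hc Hcl Hyl Hyk.
  set (u0 := y1 * c2 - y2 * c1); set (u1 := y2 * c0 - y0 * c2); set (u2 := y0 * c1 - y1 * c0).
  (* Lagrange's identity for u = y x c and l, where (y x c) x l = (y.l) c - (c.l) y. *)
  assert (Hlag : sqnorm3 u0 u1 u2 * sqnorm3 l0 l1 l2 =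
    sqnorm3 (c0 * (y0 * l0 + y1 * l1 + y2 * l2) - y0 * (c0 * l0 + c1 * l1 + c2 * l2))
            (c1 * (y0 * l0 + y1 * l1 + y2 * l2) - y1 * (c0 * l0 + c1 * l1 + c2 * l2))
            (c2 * (y0 * l0 + y1 * l1 + y2 * l2) - y2 * (c0 * l0 + c1 * l1 + c2 * l2))
    + (y0 * (l1 * c2 - l2 * c1) + y1 * (l2 * c0 - l0 * c2) + y2 * (l0 * c1 - l1 * c0)) ^ 2)
    by (unfold sqnorm3, u0, u1, u2; ring).
  rewrite Hcl, Hyl, Hyk in Hlag.
  assert (Hu : sqnorm3 u0 u1 u2 = 0).
  { assert (Hprod : sqnorm3 u0 u1 u2 * sqnorm3 l0 l1 l2 = 0)
      by (rewrite Hlag; unfold sqnorm3; ring).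
    destruct (Rmult_integral _ _ Hprod); [assumption | lra]. }
  destruct (sqnorm3_eq0 _ _ _ Hu) as (Hu0 & Hu1 & Hu2).
  exists ((y0 * c0 + y1 * c1 + y2 * c2) / sqnorm3 c0 c1 c2).
  assert (E0 : y0 * sqnorm3 c0 c1 c2 = (y0 * c0 + y1 * c1 + y2 * c2) * c0 - (u1 * c2 - u2 * c1))
    by (unfold sqnorm3, u1, u2; ring).
  assert (E1 : y1 * sqnorm3 c0 c1 c2 = (y0 * c0 + y1 * c1 + y2 * c2) * c1 - (u2 * c0 - u0 * c2))
    by (unfold sqnorm3, u0, u2; ring).
  assert (E2 : y2 * sqnorm3 c0 c1 c2 = (y0 * c0 + y1 * c1 + y2 * c2) * c2 - (u0 * c1 - u1 * c0))
    by (unfold sqnorm3, u0, u1; ring).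
  rewrite Hu1, Hu2 in E0; rewrite Hu0, Hu2 in E1; rewrite Hu0, Hu1 in E2.
  repeat split; apply Rmult_eq_reg_r with (sqnorm3 c0 c1 c2); try lra;
    [rewrite E0 | rewrite E1 | rewrite E2]; field; lra.
Qed.

Section Kepler3.
Variables x0 x1 x2 v0 v1 v2 : R -> R.

Definition N3 t := sqrt (sqnorm3 (x0 t) (x1 t) (x2 t)).

Definition ODE3 t :=
  0 < N3 t /\
  derivable_pt_lim x0 t (v0 t) /\ derivable_pt_lim x1 t (v1 t) /\ derivable_pt_lim x2 t (v2 t) /\
  derivable_pt_lim v0 t (- x0 t / N3 t ^ 3) /\ derivable_pt_lim v1 t (- x1 t / N3 t ^ 3) /\
  derivable_pt_lim v2 t (- x2 t / N3 t ^ 3).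

Definition L0 t := x1 t * v2 t - x2 t * v1 t.
Definition L1 t := x2 t * v0 t - x0 t * v2 t.
Definition L2 t := x0 t * v1 t - x1 t * v0 t.

Lemma momentum_conserved t : ODE3 t ->
  derivable_pt_lim L0 t 0 /\ derivable_pt_lim L1 t 0 /\ derivable_pt_lim L2 t 0.
Proof.
  intros (HN & d0 & d1 & d2 & e0 & e1 & e2).
  assert (HK : N3 t ^ 3 <> 0) by (apply pow_nonzero; lra).
  repeat split; apply (momentum_component_conserved _ _ _ _ t (N3 t ^ 3)); assumption.
Qed.

Lemma dl_dot_pos k0 k1 k2 t : ODE3 t ->
  derivable_pt_lim (fun s => x0 s * k0 + x1 s * k1 + x2 s * k2) t
    (v0 t * k0 + v1 t * k1 + v2 t * k2).
Proof.
  intros (HN & d0 & d1 & d2 & _).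
  eapply dl_eq;
    [apply derivable_pt_lim_plus; [apply derivable_pt_lim_plus |]; apply dl_mult_const; eassumption
    | ring].
Qed.

Lemma dl_dot_vel k0 k1 k2 t : ODE3 t ->
  derivable_pt_lim (fun s => v0 s * k0 + v1 s * k1 + v2 s * k2) t
    (- (x0 t * k0 + x1 t * k1 + x2 t * k2) / N3 t ^ 3).
Proof.
  intros (HN & _ & _ & _ & e0 & e1 & e2).
  eapply dl_eq;
    [apply derivable_pt_lim_plus; [apply derivable_pt_lim_plus |]; apply dl_mult_const; eassumption
    | field; lra].
Qed.

Lemma N3_sqr t : N3 t * N3 t = sqnorm3 (x0 t) (x1 t) (x2 t).
Proof. apply sqrt_sqrt, sqnorm3_ge0. Qed.

Lemma dl_N3 t : ODE3 t ->
  derivable_pt_lim N3 t ((x0 t * v0 t + x1 t * v1 t + x2 t * v2 t) / N3 t).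
Proof.
  intros (HN & d0 & d1 & d2 & _).
  assert (HS : 0 < sqnorm3 (x0 t) (x1 t) (x2 t)) by (apply sqnorm3_pos_of_sqrt; exact HN).
  assert (Hsq : derivable_pt_lim (fun s => sqnorm3 (x0 s) (x1 s) (x2 s)) t
                  (2 * (x0 t * v0 t + x1 t * v1 t + x2 t * v2 t))).
  { unfold sqnorm3; eapply dl_eq;
      [apply derivable_pt_lim_plus; [apply derivable_pt_lim_plus |];
         apply derivable_pt_lim_mult; eassumption
      | ring]. }
  eapply dl_eq; [exact (derivable_pt_lim_comp _ sqrt t _ _ Hsq (derivable_pt_lim_sqrt _ HS)) |].
  unfold N3 in *; field; lra.
Qed.

Lemma direction_const_of_zero_momentum t : ODE3 t -> L0 t = 0 -> L1 t = 0 -> L2 t = 0 ->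
  derivable_pt_lim (fun s => x0 s / N3 s) t 0 /\ derivable_pt_lim (fun s => x1 s / N3 s) t 0 /\
  derivable_pt_lim (fun s => x2 s / N3 s) t 0.
Proof.
  intros Hode Z0 Z1 Z2; pose proof (dl_N3 t Hode) as HN'; destruct Hode as (HN & d0 & d1 & d2 & _).
  repeat split; (eapply dl_eq; [eapply (dl_div_norm _ N3 t _ _ HN); [eassumption | exact HN'] |
    rewrite N3_sqr]).
  - transitivity ((x2 t * L1 t - x1 t * L2 t) / N3 t ^ 3); [unfold L1, L2, sqnorm3; field; lra |].
    rewrite Z1, Z2; unfold Rdiv; ring.
  - transitivity ((x0 t * L2 t - x2 t * L0 t) / N3 t ^ 3); [unfold L0, L2, sqnorm3; field; lra |].
    rewrite Z0, Z2; unfold Rdiv; ring.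
  - transitivity ((x1 t * L0 t - x0 t * L1 t) / N3 t ^ 3); [unfold L0, L1, sqnorm3; field; lra |].
    rewrite Z0, Z1; unfold Rdiv; ring.
Qed.

Section OnInterval.
Variables t1 te : R.
Hypothesis Hode : forall t, t1 <= t <= te -> ODE3 t.

Lemma momentum_const t : t1 <= t <= te -> L0 t = L0 t1 /\ L1 t = L1 t1 /\ L2 t = L2 t1.
Proof.
  intros Ht; repeat split; apply (derivable_pt_lim_0_const _ t1 te); try exact Ht;
    intros c Hc; apply (momentum_conserved c (Hode c Hc)).
Qed.

Lemma radial_of_zero_momentum : L0 t1 = 0 -> L1 t1 = 0 -> L2 t1 = 0 ->
  forall t, t1 <= t <= te ->
    x0 t = N3 t / N3 t1 * x0 t1 /\ x1 t = N3 t / N3 t1 * x1 t1 /\ x2 t = N3 t / N3 t1 * x2 t1.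
Proof.
  intros Z0 Z1 Z2 t Ht.
  assert (Hdir : forall c, t1 <= c <= te -> derivable_pt_lim (fun s => x0 s / N3 s) c 0 /\
            derivable_pt_lim (fun s => x1 s / N3 s) c 0 /\
            derivable_pt_lim (fun s => x2 s / N3 s) c 0).
  { intros c Hc; destruct (momentum_const c Hc) as (M0 & M1 & M2).
    apply direction_const_of_zero_momentum; [apply Hode, Hc | congruence ..]. }
  destruct (Hode t1 ltac:(lra)) as [HN1 _]; destruct (Hode t Ht) as [HNt _].
  assert (Hconst : forall xi : R -> R,
      (forall c, t1 <= c <= te -> derivable_pt_lim (fun s => xi s / N3 s) c 0) ->
      xi t = N3 t / N3 t1 * xi t1).
  { intros xi H.
    assert (E : xi t / N3 t = xi t1 / N3 t1) by exact (derivable_pt_lim_0_const _ t1 te H t Ht).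
    replace (xi t) with (xi t / N3 t * N3 t) by (field; lra); rewrite E; field; lra. }
  repeat split; apply Hconst; intros c Hc; apply (Hdir c Hc).
Qed.
(* The witness is a downward zero crossing of <x, l x c>, where l is the angular momentum
   and c = x t1. *)
Lemma opposite_of_nonzero_momentum s : t1 < te -> 0 < s ->
  x0 te = s * x0 t1 -> x1 te = s * x1 t1 -> x2 te = s * x2 t1 ->
  0 < sqnorm3 (L0 t1) (L1 t1) (L2 t1) ->
  exists ts lam, t1 <= ts <= te /\ lam < 0 /\
    x0 ts = lam * x0 t1 /\ x1 ts = lam * x1 t1 /\ x2 ts = lam * x2 t1.
Proof.
  intros Hte Hs E0 E1 E2 Hl.
  set (c0 := x0 t1); set (c1 := x1 t1); set (c2 := x2 t1).
  set (l0 := L0 t1) in *; set (l1 := L1 t1) in *; set (l2 := L2 t1) in *.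
  set (k0 := l1 * c2 - l2 * c1); set (k1 := l2 * c0 - l0 * c2); set (k2 := l0 * c1 - l1 * c0).
  set (f := fun t => x0 t * k0 + x1 t * k1 + x2 t * k2).
  set (f' := fun t => v0 t * k0 + v1 t * k1 + v2 t * k2).
  assert (Hf1 : f' t1 = sqnorm3 l0 l1 l2)
    by (unfold f', k0, k1, k2, sqnorm3, l0, l1, l2, L0, L1, L2, c0, c1, c2; ring).
  assert (Hfe : f' te = sqnorm3 l0 l1 l2 / s).
  { destruct (momentum_const te ltac:(lra)) as (M0 & M1 & M2); fold l0 l1 l2 in M0, M1, M2.
    apply Rmult_eq_reg_r with s; [| lra].
    transitivity (l0 * L0 te + l1 * L1 te + l2 * L2 te).
    - unfold f', L0, L1, L2; rewrite E0, E1, E2; unfold k0, k1, k2, c0, c1, c2; ring.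
    - rewrite M0, M1, M2; unfold sqnorm3; field; lra. }
  destruct (exists_down_zero f f' t1 te Hte) as [ts [Hts [Hz Hneg]]].
  { intros t Ht; apply dl_dot_pos, Hode, Ht. }
  { unfold f, k0, k1, k2, c0, c1, c2; ring. }
  { unfold f; rewrite E0, E1, E2; unfold k0, k1, k2, c0, c1, c2; ring. }
  { rewrite Hf1; exact Hl. }
  { rewrite Hfe; apply Rdiv_lt_0_compat; assumption. }
  destruct (momentum_const ts ltac:(lra)) as (M0 & M1 & M2); fold l0 l1 l2 in M0, M1, M2.
  assert (Hc : 0 < sqnorm3 c0 c1 c2) by (apply sqnorm3_pos_of_sqrt, (Hode t1 ltac:(lra))).
  destruct (parallel_of_orthogonal (x0 ts) (x1 ts) (x2 ts) c0 c1 c2 l0 l1 l2 Hl Hc)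
    as [lam (Y0 & Y1 & Y2)].
  { unfold c0, c1, c2, l0, l1, l2, L0, L1, L2; ring. }
  { rewrite <- M0, <- M1, <- M2; unfold L0, L1, L2; ring. }
  { exact Hz. }
  exists ts, lam; split; [lra | split; [| auto]].
  assert (Hlam : lam * f' ts = sqnorm3 l0 l1 l2).
  { transitivity (l0 * L0 ts + l1 * L1 ts + l2 * L2 ts).
    - unfold f', L0, L1, L2; rewrite Y0, Y1, Y2; unfold k0, k1, k2; ring.
    - rewrite M0, M1, M2; reflexivity. }
  destruct (Rlt_or_le lam 0) as [| Hge]; [assumption |].
  assert (lam * f' ts <= lam * 0) by (apply Rmult_le_compat_l; lra); lra.
Qed.
Lemma radial_of_no_opposite s : t1 < te -> 0 < s ->
  x0 te = s * x0 t1 -> x1 te = s * x1 t1 -> x2 te = s * x2 t1 ->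
  (forall t lam, t1 <= t <= te -> lam < 0 ->
     ~ (x0 t = lam * x0 t1 /\ x1 t = lam * x1 t1 /\ x2 t = lam * x2 t1)) ->
  forall t, t1 <= t <= te ->
    x0 t = N3 t / N3 t1 * x0 t1 /\ x1 t = N3 t / N3 t1 * x1 t1 /\ x2 t = N3 t / N3 t1 * x2 t1.
Proof.
  intros Hte Hs E0 E1 E2 Hno.
  destruct (Req_dec (sqnorm3 (L0 t1) (L1 t1) (L2 t1)) 0) as [HL | HL].
  - destruct (sqnorm3_eq0 _ _ _ HL) as (Z0 & Z1 & Z2); exact (radial_of_zero_momentum Z0 Z1 Z2).
  - exfalso.
    destruct (opposite_of_nonzero_momentum s Hte Hs E0 E1 E2) as (ts & lam & Hts & Hlam & Hopp).
    { pose proof (sqnorm3_ge0 (L0 t1) (L1 t1) (L2 t1)); lra. }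
    exact (Hno ts lam Hts Hlam Hopp).
Qed.
End OnInterval.
End Kepler3.

(** * Direct arcs are radial *)

Lemma InArcHull_point d O q tA tB t : tA <= t <= tB ->
  (forall i, (i < d)%nat -> q t i = O i) -> InArcHull d q tA tB O.
Proof.
  intros Ht H; exists 1%nat, (fun _ => 1), (fun _ => t); split; [| split].
  - intros k Hk; split; lra.
  - simpl; ring.
  - intros i Hi; simpl; rewrite H by exact Hi; ring.
Qed.

Lemma InArcHull_opposite d O q tA tB t t' lam : tA <= t <= tB -> tA <= t' <= tB -> lam < 0 ->
  (forall i, (i < d)%nat -> q t' i - O i = lam * (q t i - O i)) -> InArcHull d q tA tB O.
Proof.
  intros Ht Ht' Hl H.
  exists 2%nat, (fun k => if Nat.eqb k 0 then - lam / (1 - lam) else 1 / (1 - lam)),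
    (fun k => if Nat.eqb k 0 then t else t'); split; [| split].
  - intros k Hk; assert (0 < / (1 - lam)) by (apply Rinv_0_lt_compat; lra).
    destruct k as [| k]; simpl; (split; [apply Rmult_le_pos |]); lra.
  - simpl; field; lra.
  - intros i Hi; simpl; specialize (H i Hi).
    replace (q t' i) with (O i + lam * (q t i - O i)) by lra; field; lra.
Qed.

(* The velocity v of a Kepler arc is not required to vanish beyond the dimension, hence the
   truncation in velc. *)
Definition relc (q : R -> pt) (O : pt) (i : nat) (t : R) := q t i - O i.
Definition velc (d : nat) (v : R -> pt) (i : nat) (t : R) := if Nat.ltb i d then v t i else 0.

Section Arcs.
Variable d : nat.
Hypothesis Hd : (d = 2 \/ d = 3)%nat.
Variable O : pt.
Hypothesis HO : inR d O.

Lemma norm_relc q t : inR d (q t) ->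
  norm d (vsub (q t) O) = N3 (relc q O 0) (relc q O 1) (relc q O 2) t.
Proof. intros Hq; rewrite (norm_coords d Hd _ (inR_vsub d _ _ Hq HO)); reflexivity. Qed.

Lemma direct_arc_no_collision q tA tB t : inR d (q t) ->
  DirectArc d O q tA tB -> tA <= t <= tB -> 0 < norm d (vsub (q t) O).
Proof.
  intros Hq Hdir Ht; rewrite (norm_relc q t Hq); unfold N3.
  destruct (sqrt_pos (sqnorm3 (relc q O 0 t) (relc q O 1 t) (relc q O 2 t))) as [| H]; auto.
  exfalso; apply Hdir, (InArcHull_point d O q tA tB t Ht).
  symmetry in H; apply sqrt_eq_0 in H; [| apply sqnorm3_ge0].
  destruct (sqnorm3_eq0 _ _ _ H) as (H0 & H1 & H2); unfold relc in *.
  intros i Hi; assert (i = 0 \/ i = 1 \/ i = 2)%nat as [-> | [-> | ->]] by lia; lra.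
Qed.

Lemma kepler_ODE3 q v t : (forall t, inR d (q t)) -> 0 < norm d (vsub (q t) O) ->
  (forall i, (i < d)%nat ->
     derivable_pt_lim (fun s => q s i) t (v t i) /\
     derivable_pt_lim (fun s => v s i) t (- (q t i - O i) / (norm d (vsub (q t) O)) ^ 3)) ->
  ODE3 (relc q O 0) (relc q O 1) (relc q O 2) (velc d v 0) (velc d v 1) (velc d v 2) t.
Proof.
  intros Hq Hn Hder; rewrite (norm_relc q t (Hq t)) in Hn, Hder.
  assert (G : forall i, (i < d)%nat ->
    derivable_pt_lim (relc q O i) t (velc d v i t) /\
    derivable_pt_lim (velc d v i) t
      (- relc q O i t / N3 (relc q O 0) (relc q O 1) (relc q O 2) t ^ 3)).
  { intros i Hi; destruct (Hder i Hi) as [D1 D2].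
    assert (Hb : Nat.ltb i d = true) by (apply Nat.ltb_lt; exact Hi).
    unfold velc, relc; rewrite Hb; split.
    - eapply dl_eq; [apply derivable_pt_lim_minus; [exact D1 | apply derivable_pt_lim_const] |].
      ring.
    - replace (fun s => if Nat.ltb i d then v s i else 0) with (fun s => v s i)
        by (extensionality s; rewrite Hb; reflexivity); exact D2. }
  split; [exact Hn |].
  destruct Hd as [Hd2 | Hd3].
  - assert (Z : relc q O 2 = fun _ => 0)
      by (extensionality s; unfold relc; rewrite (Hq s 2%nat), (HO 2%nat) by lia; ring).
    assert (ZV : velc d v 2 = fun _ => 0) by (extensionality s; unfold velc; subst d; reflexivity).
    destruct (G 0%nat ltac:(lia)) as [A0 B0]; destruct (G 1%nat ltac:(lia)) as [A1 B1].
    repeat split; auto; rewrite ?Z, ZV; [apply derivable_pt_lim_const |].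
    eapply dl_eq; [apply derivable_pt_lim_const | unfold Rdiv; ring].
  - destruct (G 0%nat ltac:(lia)) as [A0 B0]; destruct (G 1%nat ltac:(lia)) as [A1 B1].
    destruct (G 2%nat ltac:(lia)) as [A2 B2]; repeat split; auto.
Qed.

End Arcs.

Definition uvec d (O A : pt) : pt := fun i => (A i - O i) / norm d (vsub A O).

Definition rho d (O A : pt) (q : R -> pt) (t : R) :=
  relc q O 0 t * uvec d O A 0%nat + relc q O 1 t * uvec d O A 1%nat +
  relc q O 2 t * uvec d O A 2%nat.

Section Radial.
Variable d : nat.
Hypothesis Hd : (d = 2 \/ d = 3)%nat.
Variables O A : pt.
Hypothesis HO : inR d O.
Hypothesis HA : inR d A.
Hypothesis HnA : 0 < norm d (vsub A O).

Lemma norm_AO :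
  norm d (vsub A O) = sqrt (sqnorm3 (A 0%nat - O 0%nat) (A 1%nat - O 1%nat) (A 2%nat - O 2%nat)).
Proof. exact (norm_coords d Hd _ (inR_vsub d _ _ HA HO)). Qed.

Lemma norm_AO_sqr : norm d (vsub A O) * norm d (vsub A O) =
  sqnorm3 (A 0%nat - O 0%nat) (A 1%nat - O 1%nat) (A 2%nat - O 2%nat).
Proof. rewrite norm_AO; apply sqrt_sqrt, sqnorm3_ge0. Qed.

Lemma uvec_unit : sqnorm3 (uvec d O A 0%nat) (uvec d O A 1%nat) (uvec d O A 2%nat) = 1.
Proof.
  unfold uvec; transitivity (sqnorm3 (A 0%nat - O 0%nat) (A 1%nat - O 1%nat) (A 2%nat - O 2%nat) /
                               (norm d (vsub A O) * norm d (vsub A O))).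
  - unfold sqnorm3; field; lra.
  - rewrite <- norm_AO_sqr; field; lra.
Qed.

Lemma inR_uvec : inR d (uvec d O A).
Proof. intros i Hi; unfold uvec; rewrite HA, HO by exact Hi; unfold Rdiv; ring. Qed.

Lemma rho_of_multiple q t c : inR d (q t) ->
  (forall i, (i < d)%nat -> q t i - O i = c * (A i - O i)) -> rho d O A q t = c * norm d (vsub A O).
Proof.
  intros Hq H.
  assert (H3 := coords3_of_lt_d d (fun a b => a = c * b) _ _ (eq_sym (Rmult_0_r c))
                  (inR_vsub d _ _ Hq HO) (inR_vsub d _ _ HA HO) H).
  unfold rho, relc, uvec; unfold vsub in H3; rewrite !H3 by lia.
  transitivity (c * (norm d (vsub A O) * norm d (vsub A O)) / norm d (vsub A O)).
  - rewrite norm_AO_sqr; unfold sqnorm3; field; lra.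
  - field; lra.
Qed.

Lemma direct_arc_ODE3 q t1 t2 : KeplerArc d O q t1 t2 -> DirectArc d O q t1 t2 ->
  exists v, forall t, t1 <= t <= t2 ->
    ODE3 (relc q O 0) (relc q O 1) (relc q O 2) (velc d v 0) (velc d v 1) (velc d v 2) t.
Proof.
  intros [Hlt [HinR [a [b [v [h [Ha [Hb [_ [Hder _]]]]]]]]]] Hdir.
  exists v; intros t Ht.
  assert (Hn := direct_arc_no_collision d Hd O HO q t1 t2 t (HinR t) Hdir Ht).
  apply (kepler_ODE3 d Hd O HO q v t HinR Hn), Hder; [lra | exact Hn].
Qed.

Lemma direct_arc_along_ray q v t1 T s : 0 < T -> 0 < s -> (forall t, inR d (q t)) ->
  (forall t, t1 <= t <= t1 + T ->
     ODE3 (relc q O 0) (relc q O 1) (relc q O 2) (velc d v 0) (velc d v 1) (velc d v 2) t) ->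
  DirectArc d O q t1 (t1 + T) -> eqpt d (q t1) A ->
  (forall i, (i < d)%nat -> q (t1 + T) i - O i = s * (A i - O i)) ->
  forall t, t1 <= t <= t1 + T -> forall i, (i < 3)%nat ->
    relc q O i t = N3 (relc q O 0) (relc q O 1) (relc q O 2) t * uvec d O A i.
Proof.
  intros HT Hs HinR Hode Hdir Hq1 Hqe.
  set (X0 := relc q O 0%nat); set (X1 := relc q O 1%nat); set (X2 := relc q O 2%nat).
  assert (HX1 : forall i, (i < 3)%nat -> relc q O i t1 = A i - O i).
  { intros i Hi; unfold relc.
    rewrite (coords3_of_lt_d d eq _ _ eq_refl (HinR t1) HA Hq1 i Hi); reflexivity. }
  assert (HXe : forall i, (i < 3)%nat -> relc q O i (t1 + T) = s * relc q O i t1).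
  { intros i Hi; rewrite HX1 by exact Hi.
    exact (coords3_of_lt_d d (fun a b => a = s * b) _ _ (eq_sym (Rmult_0_r s))
             (inR_vsub d _ _ (HinR (t1 + T)) HO) (inR_vsub d _ _ HA HO) Hqe i Hi). }
  assert (Hno : forall t lam, t1 <= t <= t1 + T -> lam < 0 ->
     ~ (X0 t = lam * X0 t1 /\ X1 t = lam * X1 t1 /\ X2 t = lam * X2 t1)).
  { intros t lam Ht Hl (E0 & E1 & E2); apply Hdir.
    apply (InArcHull_opposite d O q t1 (t1 + T) t1 t lam); try lra.
    intros i Hi; assert (i = 0 \/ i = 1 \/ i = 2)%nat as [-> | [-> | ->]] by lia; assumption. }
  assert (Hrad := radial_of_no_opposite X0 X1 X2 _ _ _ t1 (t1 + T) Hode s ltac:(lra) Hs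
     (HXe 0%nat ltac:(lia)) (HXe 1%nat ltac:(lia)) (HXe 2%nat ltac:(lia)) Hno).
  assert (HN1 : N3 X0 X1 X2 t1 = norm d (vsub A O))
    by (rewrite norm_AO; unfold N3, X0, X1, X2; rewrite !HX1 by lia; reflexivity).
  intros t Ht i Hi; destruct (Hrad t Ht) as (R0 & R1 & R2).
  unfold uvec; rewrite <- HN1, <- (HX1 i Hi).
  destruct (Hode t1 ltac:(lra)) as [HN1p _].
  assert (i = 0 \/ i = 1 \/ i = 2)%nat as [-> | [-> | ->]] by lia; fold X0 X1 X2 in HN1p |- *;
    [rewrite R0 | rewrite R1 | rewrite R2]; field; lra.
Qed.

Lemma direct_arc_radial q t1 T s : 0 < T -> 0 < s ->
  KeplerArc d O q t1 (t1 + T) -> DirectArc d O q t1 (t1 + T) -> eqpt d (q t1) A ->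
  (forall i, (i < d)%nat -> q (t1 + T) i - O i = s * (A i - O i)) ->
  exists w, forall t, t1 <= t <= t1 + T ->
    radial_motion (rho d O A q) w t /\
    forall i, (i < d)%nat -> q t i = O i + rho d O A q t * uvec d O A i.
Proof.
  intros HT Hs HK Hdir Hq1 Hqe.
  destruct (direct_arc_ODE3 q t1 (t1 + T) HK Hdir) as [v Hode].
  assert (HinR : forall t, inR d (q t)) by (destruct HK as [_ [H _]]; exact H).
  assert (Hrep := direct_arc_along_ray q v t1 T s HT Hs HinR Hode Hdir Hq1 Hqe).
  set (X0 := relc q O 0%nat) in *; set (X1 := relc q O 1%nat) in *; set (X2 := relc q O 2%nat) in *.
  set (V0 := velc d v 0%nat) in *; set (V1 := velc d v 1%nat) in *; set (V2 := velc d v 2%nat) in *.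
  assert (Hrho : forall t, t1 <= t <= t1 + T -> rho d O A q t = N3 X0 X1 X2 t).
  { intros t Ht; unfold rho; rewrite !(Hrep t Ht) by lia.
    transitivity (N3 X0 X1 X2 t * sqnorm3 (uvec d O A 0%nat) (uvec d O A 1%nat) (uvec d O A 2%nat));
      [unfold sqnorm3; ring | rewrite uvec_unit; ring]. }
  exists (fun t => V0 t * uvec d O A 0%nat + V1 t * uvec d O A 1%nat + V2 t * uvec d O A 2%nat).
  intros t Ht; destruct (Hode t Ht) as [HNt _].
  split; [split; [| split] |].
  - rewrite Hrho; assumption.
  - exact (dl_dot_pos X0 X1 X2 V0 V1 V2 _ _ _ t (Hode t Ht)).
  - eapply dl_eq; [exact (dl_dot_vel X0 X1 X2 V0 V1 V2 _ _ _ t (Hode t Ht)) |].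
    change (X0 t * uvec d O A 0%nat + X1 t * uvec d O A 1%nat + X2 t * uvec d O A 2%nat)
      with (rho d O A q t).
    rewrite Hrho by exact Ht; field; lra.
  - intros i Hi; rewrite Hrho by exact Ht; rewrite <- (Hrep t Ht i) by (destruct Hd; lia).
    unfold relc; ring.
Qed.

Lemma direct_arcs_agree B q1 q2 t1 t2 T s : 0 < T -> 0 < s ->
  (forall i, (i < d)%nat -> B i - O i = s * (A i - O i)) ->
  ArcFromTo d O A B q1 t1 T -> DirectArc d O q1 t1 (t1 + T) ->
  ArcFromTo d O A B q2 t2 T -> DirectArc d O q2 t2 (t2 + T) ->
  forall x, 0 <= x <= T -> eqpt d (q1 (t1 + x)) (q2 (t2 + x)).
Proof.
  intros HT Hs HB [K1 [S1 E1]] D1 [K2 [S2 E2]] D2.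
  assert (Hin1 : forall t, inR d (q1 t)) by (destruct K1 as [_ [H _]]; exact H).
  assert (Hin2 : forall t, inR d (q2 t)) by (destruct K2 as [_ [H _]]; exact H).
  assert (He1 : forall i, (i < d)%nat -> q1 (t1 + T) i - O i = s * (A i - O i))
    by (intros i Hi; rewrite E1 by exact Hi; auto).
  assert (He2 : forall i, (i < d)%nat -> q2 (t2 + T) i - O i = s * (A i - O i))
    by (intros i Hi; rewrite E2 by exact Hi; auto).
  destruct (direct_arc_radial q1 t1 T s HT Hs K1 D1 S1 He1) as [w1 R1].
  destruct (direct_arc_radial q2 t2 T s HT Hs K2 D2 S2 He2) as [w2 R2].
  assert (Hstart : forall q t, inR d (q t) -> eqpt d (q t) A -> rho d O A q t = norm d (vsub A O)).
  { intros q t Hq Hqt; rewrite (rho_of_multiple q t 1 Hq); [ring |].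
    intros i Hi; rewrite Hqt by exact Hi; ring. }
  intros x Hx i Hi.
  assert (Hr : rho d O A q1 (t1 + x) = rho d O A q2 (t2 + x)).
  { apply (radial_bvp_unique (fun y => rho d O A q1 (t1 + y)) (fun y => rho d O A q2 (t2 + y))
             (fun y => w1 (t1 + y)) (fun y => w2 (t2 + y)) T HT); [| | | | exact Hx].
    - intros y Hy; apply radial_motion_shift, R1; lra.
    - intros y Hy; apply radial_motion_shift, R2; lra.
    - rewrite !Rplus_0_r, !Hstart by auto; reflexivity.
    - rewrite !rho_of_multiple with (c := s) by auto; reflexivity. }
  destruct (R1 (t1 + x) ltac:(lra)) as [_ Q1]; destruct (R2 (t2 + x) ltac:(lra)) as [_ Q2].
  rewrite Q1, Q2, Hr by exact Hi; reflexivity.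
Qed.

End Radial.

(** * Radial motions with prescribed endpoints and duration *)

Definition solves_radial_bvp (r w : R -> R) (r0 r1 T : R) : Prop :=
  exists al be, al < 0 /\ T < be /\ (forall t, al < t < be -> radial_motion r w t) /\
    r 0 = r0 /\ r T = r1.

(* A curve u |-> (time Th u, radius P u) with Th increasing gives a radial motion once
   reparametrized by time, provided dP/du = W * dTh/du and dW/du = - dTh/du / P^2. *)
Section Reparametrization.
Variables (Th th P W : R -> R) (lb ub : R).
Hypothesis Hlu : lb < ub.
Hypothesis HTh : forall u, lb <= u <= ub -> derivable_pt_lim Th u (th u) /\ 0 < th u.
Hypothesis HP : forall u, lb <= u <= ub ->
  0 < P u /\ derivable_pt_lim P u (W u * th u) /\ derivable_pt_lim W u (- th u / (P u) ^ 2).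

Definition inv_time (t : R) : R := epsilon (inhabits 0) (fun u => lb <= u <= ub /\ Th u = t).

Lemma time_incr x y : lb <= x -> x < y -> y <= ub -> Th x < Th y.
Proof. apply (increasing_of_dl_pos Th th lb ub); intros; apply HTh; assumption. Qed.

Lemma time_le x y : lb <= x -> x <= y -> y <= ub -> Th x <= Th y.
Proof. intros Hx [Hlt | ->] Hy; [left; apply time_incr |]; lra. Qed.

Lemma time_cont u : lb <= u <= ub -> continuity_pt Th u.
Proof. intros Hu; apply (continuity_pt_of_dl _ _ (th u)), HTh, Hu. Qed.

Lemma inv_time_spec t : Th lb <= t <= Th ub -> lb <= inv_time t <= ub /\ Th (inv_time t) = t.
Proof.
  intros Ht; unfold inv_time; apply epsilon_spec.
  destruct (f_interv_is_interv Th lb ub t Hlu Ht time_cont) as [u Hu]; exists u; exact Hu.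
Qed.

Lemma inv_time_time u : lb <= u <= ub -> inv_time (Th u) = u.
Proof.
  intros Hu.
  destruct (inv_time_spec (Th u)) as [Hs HTs]; [split; apply time_le; lra |].
  destruct (Rtotal_order (inv_time (Th u)) u) as [Hlt | [| Hgt]]; auto; exfalso.
  - pose proof (time_incr (inv_time (Th u)) u ltac:(lra) Hlt ltac:(lra)); lra.
  - pose proof (time_incr u (inv_time (Th u)) ltac:(lra) Hgt ltac:(lra)); lra.
Qed.

Lemma dl_inv_time t : Th lb < t < Th ub -> derivable_pt_lim inv_time t (1 / th (inv_time t)).
Proof.
  intros Ht.
  assert (Hlb : inv_time (Th lb) = lb) by (apply inv_time_time; lra).
  assert (Hub : inv_time (Th ub) = ub) by (apply inv_time_time; lra).
  assert (Hs : lb <= inv_time t <= ub) by (apply inv_time_spec; lra).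
  assert (Prf : forall a, inv_time (Th lb) <= a <= inv_time (Th ub) -> derivable_pt Th a)
    by (rewrite Hlb, Hub; intros a Ha; exists (th a); apply HTh, Ha).
  assert (Hcont : continuity_pt inv_time t).
  { apply (continuity_pt_recip_interv Th inv_time lb ub Hlu); [| | | exact time_cont | exact Ht].
    - intros; apply time_incr; assumption.
    - intros x Hx1 Hx2; apply inv_time_spec; split; assumption.
    - intros x Hx1 Hx2; apply inv_time_spec; split; assumption. }
  assert (Hincr : inv_time (Th lb) <= inv_time t <= inv_time (Th ub))
    by (rewrite Hlb, Hub; exact Hs).
  pose proof (derivable_pt_lim_recip_interv Th inv_time (Th lb) (Th ub) t Prf Hcont
                ltac:(apply time_incr; lra) Ht Hincr) as D.
  rewrite (derive_pt_eq_0 Th (inv_time t) (th (inv_time t)) (Prf (inv_time t) Hincr)) in D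
    by (apply HTh, Hs).
  apply D; [intros x Hx; apply inv_time_spec, Hx |].
  destruct (HTh (inv_time t) Hs); lra.
Qed.

Lemma reparam_radial_motion t : Th lb < t < Th ub ->
  radial_motion (fun s => P (inv_time s)) (fun s => W (inv_time s)) t.
Proof.
  intros Ht; pose proof (dl_inv_time t Ht) as D.
  assert (Hs : lb <= inv_time t <= ub) by (apply inv_time_spec; lra).
  destruct (HP _ Hs) as (H1 & H2 & H3); destruct (HTh _ Hs) as [_ Hth].
  split; [exact H1 | split].
  - eapply dl_eq; [exact (derivable_pt_lim_comp inv_time P t _ _ D H2) | field; lra].
  - eapply dl_eq; [exact (derivable_pt_lim_comp inv_time W t _ _ D H3) | field; lra].
Qed.

End Reparametrization.

Lemma one_minus_cos_pos u : 0 < u < 2 * PI -> 0 < 1 - cos u.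
Proof.
  intros Hu; replace u with (2 * (u / 2)) by field; rewrite cos_2a_sin.
  assert (0 < sin (u / 2)) by (apply sin_gt_0; lra); nra.
Qed.

Section Elliptic.
Variables r0 r1 : R.
Hypothesis Hr0 : 0 < r0.
Hypothesis Hr01 : r0 < r1.

(* Radial Kepler motion of energy -1/(2a) in eccentric-anomaly form: r = a (1 - cos u) at
   time a^(3/2) (u - sin u).  The semi-major axis a is chosen so that r = r1 at anomaly uB;
   r = r0 at the anomaly uA < uB, before the apocenter. *)
Definition ell_a uB := r1 / (1 - cos uB).
Definition ell_uA uB := acos (1 - r0 / ell_a uB).
Definition ell_T uB :=
  ell_a uB * sqrt (ell_a uB) * ((uB - sin uB) - (ell_uA uB - sin (ell_uA uB))).

Section Anomalies.
Variable uB : R.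
Hypothesis HuB : 0 < uB < 2 * PI.

Lemma ell_a_pos : 0 < ell_a uB.
Proof. apply Rdiv_lt_0_compat; [lra | apply one_minus_cos_pos, HuB]. Qed.

Lemma ell_radius_B : ell_a uB * (1 - cos uB) = r1.
Proof. pose proof (one_minus_cos_pos uB HuB); unfold ell_a; field; lra. Qed.

Lemma ell_cos_uA_range : -1 < 1 - r0 / ell_a uB < 1.
Proof.
  pose proof ell_a_pos; pose proof (one_minus_cos_pos uB HuB); pose proof (COS_bound uB).
  assert (0 < r0 / ell_a uB) by (apply Rdiv_lt_0_compat; lra).
  assert (r0 / ell_a uB < 2); [| lra].
  apply (Rmult_lt_reg_r (ell_a uB)); [lra |].
  replace (r0 / ell_a uB * ell_a uB) with r0 by (field; lra).
  pose proof ell_radius_B; nra.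
Qed.

Lemma cos_ell_uA : cos (ell_uA uB) = 1 - r0 / ell_a uB.
Proof. apply cos_acos; pose proof ell_cos_uA_range; lra. Qed.

Lemma ell_radius_A : ell_a uB * (1 - cos (ell_uA uB)) = r0.
Proof. rewrite cos_ell_uA; pose proof ell_a_pos; field; lra. Qed.

Lemma ell_uA_range : 0 < ell_uA uB < PI.
Proof. apply acos_bound_lt, ell_cos_uA_range. Qed.

Lemma ell_uA_lt : ell_uA uB < uB.
Proof.
  pose proof ell_uA_range; destruct (Rle_or_lt uB PI) as [Hle | Hgt]; [| lra].
  apply (cos_decreasing_0 uB (ell_uA uB)); try lra.
  rewrite cos_ell_uA; pose proof ell_a_pos; pose proof ell_radius_B.
  assert (r0 / ell_a uB < r1 / ell_a uB)
    by (apply Rmult_lt_compat_r; [apply Rinv_0_lt_compat |]; lra).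
  replace (cos uB) with (1 - r1 / ell_a uB) by (rewrite <- ell_radius_B at 1; field; lra); lra.
Qed.

End Anomalies.

Section Orbit.
Variable uB : R.
Hypothesis HuB : 0 < uB < 2 * PI.

Definition ell_time u :=
  ell_a uB * sqrt (ell_a uB) * (u - sin u - (ell_uA uB - sin (ell_uA uB))).
Definition ell_dtime u := ell_a uB * sqrt (ell_a uB) * (1 - cos u).
Definition ell_radius u := ell_a uB * (1 - cos u).
Definition ell_speed u := sin u / (sqrt (ell_a uB) * (1 - cos u)).

Let lb := ell_uA uB / 2.
Let ub := (uB + 2 * PI) / 2.

Lemma ell_window : 0 < lb /\ lb < ell_uA uB /\ ell_uA uB < uB /\ uB < ub /\ ub < 2 * PI.
Proof. pose proof (ell_uA_range uB HuB); pose proof (ell_uA_lt uB HuB); unfold lb, ub; lra. Qed.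

Lemma sqrt_ell_a : 0 < sqrt (ell_a uB) /\ sqrt (ell_a uB) * sqrt (ell_a uB) = ell_a uB.
Proof.
  pose proof (ell_a_pos uB HuB); split; [apply sqrt_lt_R0; lra | apply sqrt_sqrt; lra].
Qed.

Lemma ell_time_derive u : lb <= u <= ub ->
  derivable_pt_lim ell_time u (ell_dtime u) /\ 0 < ell_dtime u.
Proof.
  intros Hu; pose proof ell_window; pose proof (ell_a_pos uB HuB); pose proof sqrt_ell_a.
  split.
  - apply is_derive_Reals; unfold ell_time, ell_dtime; auto_derive; [exact I | ring].
  - unfold ell_dtime; apply Rmult_lt_0_compat; [nra | apply one_minus_cos_pos; lra].
Qed.

Lemma ell_radius_derive u : lb <= u <= ub ->
  0 < ell_radius u /\ derivable_pt_lim ell_radius u (ell_speed u * ell_dtime u) /\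
  derivable_pt_lim ell_speed u (- ell_dtime u / (ell_radius u) ^ 2).
Proof.
  intros Hu; pose proof ell_window; pose proof (ell_a_pos uB HuB); pose proof sqrt_ell_a.
  assert (Hc : 0 < 1 - cos u) by (apply one_minus_cos_pos; lra).
  pose proof (sin2_cos2 u) as S; unfold Rsqr in S.
  split; [| split].
  - unfold ell_radius; apply Rmult_lt_0_compat; lra.
  - apply is_derive_Reals; unfold ell_radius, ell_speed, ell_dtime.
    auto_derive; [exact I | field; lra].
  - unfold ell_speed, ell_dtime, ell_radius; eapply dl_eq.
    + apply (derivable_pt_lim_div sin (fun u => sqrt (ell_a uB) * (1 - cos u)));
        [apply derivable_pt_lim_sin | | apply Rmult_integral_contrapositive; split; lra].
      apply derivable_pt_lim_scal, derivable_pt_lim_minus;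
        [apply derivable_pt_lim_const | apply derivable_pt_lim_cos].
    + unfold Rsqr; set (s := sqrt (ell_a uB)); fold s in H1.
      replace (ell_a uB) with (s * s) by (exact (proj2 H1)).
      transitivity (s * (cos u - (sin u * sin u + cos u * cos u)) /
                    (s * (1 - cos u) * (s * (1 - cos u))));
        [field; split; lra | rewrite S; field; split; lra].
Qed.

Lemma ell_energy u : lb <= u <= ub ->
  ell_speed u * ell_speed u / 2 - 1 / ell_radius u = - / (2 * ell_a uB).
Proof.
  intros Hu; pose proof ell_window; pose proof (ell_a_pos uB HuB); pose proof sqrt_ell_a.
  assert (Hc : 0 < 1 - cos u) by (apply one_minus_cos_pos; lra).
  pose proof (sin2_cos2 u) as S; unfold Rsqr in S; unfold ell_speed, ell_radius.
  replace (sin u / (sqrt (ell_a uB) * (1 - cos u)) * (sin u / (sqrt (ell_a uB) * (1 - cos u))))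
    with ((sin u * sin u) / ((sqrt (ell_a uB) * sqrt (ell_a uB)) * ((1 - cos u) * (1 - cos u))))
    by (field; split; lra).
  destruct sqrt_ell_a as [_ ->].
  replace (sin u * sin u) with ((1 - cos u) * (1 + cos u)) by nra; field; split; lra.
Qed.

Lemma ell_time_A : ell_time (ell_uA uB) = 0.
Proof. unfold ell_time; ring. Qed.

Lemma ell_time_B : ell_time uB = ell_T uB.
Proof. unfold ell_time, ell_T; ring. Qed.

Lemma ell_window_times : ell_time lb < 0 /\ ell_T uB < ell_time ub.
Proof.
  pose proof ell_window as (H1 & H2 & H3 & H4 & H5).
  rewrite <- ell_time_A, <- ell_time_B.
  split; apply (time_incr ell_time ell_dtime lb ub ell_time_derive); lra.
Qed.

Lemma ell_solution :
  solves_radial_bvp (fun t => ell_radius (inv_time ell_time lb ub t))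
    (fun t => ell_speed (inv_time ell_time lb ub t)) r0 r1 (ell_T uB).
Proof.
  pose proof ell_window as (H1 & H2 & H3 & H4 & H5); pose proof ell_window_times as [HA HB].
  exists (ell_time lb), (ell_time ub); split; [exact HA | split; [exact HB | split; [| split]]].
  - intros t Ht.
    exact (reparam_radial_motion _ _ _ _ lb ub ltac:(lra) ell_time_derive ell_radius_derive t Ht).
  - rewrite <- ell_time_A, (inv_time_time _ _ lb ub ltac:(lra) ell_time_derive) by lra.
    exact (ell_radius_A uB HuB).
  - rewrite <- ell_time_B, (inv_time_time _ _ lb ub ltac:(lra) ell_time_derive) by lra.
    exact (ell_radius_B uB HuB).
Qed.

End Orbit.
End Elliptic.

Lemma inv_sqrt_lipschitz x y m : 0 < m -> m <= x -> m <= y ->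
  Rabs (/ sqrt x - / sqrt y) <= Rabs (x - y) / (2 * m * sqrt m).
Proof.
  intros Hm Hx Hy.
  assert (Sm : 0 < sqrt m) by (apply sqrt_lt_R0; lra).
  assert (Sx : sqrt m <= sqrt x) by (apply sqrt_le_1_alt; lra).
  assert (Sy : sqrt m <= sqrt y) by (apply sqrt_le_1_alt; lra).
  assert (Ex : sqrt x * sqrt x = x) by (apply sqrt_sqrt; lra).
  assert (Ey : sqrt y * sqrt y = y) by (apply sqrt_sqrt; lra).
  assert (Em : sqrt m * sqrt m = m) by (apply sqrt_sqrt; lra).
  replace (/ sqrt x - / sqrt y) with ((y - x) / (sqrt x * sqrt y * (sqrt x + sqrt y)))
    by (replace (y - x) with (sqrt y * sqrt y - sqrt x * sqrt x) by lra; field; lra).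
  unfold Rdiv; rewrite Rabs_mult, Rabs_minus_sym.
  apply Rmult_le_compat_l; [apply Rabs_pos |].
  rewrite Rabs_inv, Rabs_pos_eq by (apply Rmult_le_pos; [apply Rmult_le_pos |]; lra).
  apply Rinv_le_contravar; [apply Rmult_lt_0_compat; lra |].
  apply Rle_trans with (sqrt m * sqrt m * (2 * sqrt m)); [rewrite Em; lra |].
  apply Rmult_le_compat; [nra | lra | apply Rmult_le_compat | ]; lra.
Qed.

(* Outward radial motion from r0 to r1 at energy h: the time to reach radius x is the
   integral of dr / sqrt (2 (h + 1/r)) from r0 to x. *)
Section OutwardMotion.
Variables r0 r1 : R.
Hypothesis Hr0 : 0 < r0.
Hypothesis Hr01 : r0 < r1.

(* Above int_hmin the integrand is defined on ]0, 4 r1 / 3[, a neighbourhood of [r0, r1]. *)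
Definition int_hmin := - 3 / (4 * r1).
Definition int_dt h x := / sqrt (2 * (h + / x)).
Definition int_time h x := RInt (int_dt h) r0 x.
Definition int_T h := int_time h r1.

Lemma int_domain h x : int_hmin < h -> 0 < x < 4 * r1 / 3 -> 0 < h + / x.
Proof.
  intros Hh Hx; unfold int_hmin in Hh.
  assert (3 / (4 * r1) < / x); [| unfold Rdiv in *; lra].
  replace (3 / (4 * r1)) with (/ (4 * r1 / 3)) by (field; lra).
  apply Rinv_lt_contravar; nra.
Qed.

Lemma int_dt_pos h x : int_hmin < h -> 0 < x < 4 * r1 / 3 -> 0 < int_dt h x.
Proof.
  intros Hh Hx; pose proof (int_domain h x Hh Hx).
  apply Rinv_0_lt_compat, sqrt_lt_R0; lra.
Qed.

Lemma int_dt_cont h x : int_hmin < h -> 0 < x < 4 * r1 / 3 -> continuous (int_dt h) x.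
Proof.
  intros Hh Hx; pose proof (int_domain h x Hh Hx).
  apply continuity_pt_filterlim; unfold int_dt.
  apply (continuity_pt_comp (fun x => sqrt (2 * (h + / x))) Rinv);
    [apply (continuity_pt_comp (fun x => 2 * (h + / x)) sqrt) |].
  - apply continuity_pt_scal, continuity_pt_plus;
      [apply continuity_pt_cst | apply continuity_pt_inv; [| lra]].
    apply derivable_continuous_pt, derivable_pt_id.
  - apply continuity_pt_sqrt; lra.
  - apply continuity_pt_inv; [apply derivable_continuous_pt, derivable_pt_id |].
    assert (0 < sqrt (2 * (h + / x))) by (apply sqrt_lt_R0; lra); lra.
Qed.

Lemma int_dt_integrable h a b : int_hmin < h -> 0 < a < 4 * r1 / 3 -> 0 < b < 4 * r1 / 3 ->
  ex_RInt (int_dt h) a b.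
Proof.
  intros Hh Ha Hb; apply (@ex_RInt_continuous R_CompleteNormedModule).
  intros z Hz; apply int_dt_cont; [exact Hh |]; split.
  - apply Rlt_le_trans with (Rmin a b); [apply Rmin_glb_lt |]; lra.
  - apply Rle_lt_trans with (Rmax a b); [| apply Rmax_lub_lt]; lra.
Qed.

Lemma dl_int_time h x : int_hmin < h -> 0 < x < 4 * r1 / 3 ->
  derivable_pt_lim (int_time h) x (int_dt h x).
Proof.
  intros Hh Hx; apply is_derive_Reals; unfold int_time.
  apply (is_derive_RInt (int_dt h) (fun b => RInt (int_dt h) r0 b) r0 x);
    [| apply int_dt_cont; assumption].
  set (e := Rmin (x / 2) ((4 * r1 / 3 - x) / 2)).
  assert (He : 0 < e) by (apply Rmin_pos; lra).
  exists (mkposreal e He); intros y Hy; change (Rabs (y - x) < e) in Hy; apply Rabs_def2 in Hy.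
  assert (e <= x / 2) by apply Rmin_l; assert (e <= (4 * r1 / 3 - x) / 2) by apply Rmin_r.
  apply (@RInt_correct R_CompleteNormedModule), int_dt_integrable; lra.
Qed.

Lemma int_time_r0 h : int_time h r0 = 0.
Proof. unfold int_time; rewrite RInt_point; reflexivity. Qed.

Lemma int_T_lipschitz del h h0 : 0 < del -> int_hmin + del <= h -> int_hmin + del <= h0 ->
  let m := 2 * (del + / (4 * r1)) in
  Rabs (int_T h - int_T h0) <= (r1 - r0) * (2 * Rabs (h - h0) / (2 * m * sqrt m)).
Proof.
  intros Hdel Hh Hh0 m.
  assert (Hm : 0 < m) by (unfold m; assert (0 < / (4 * r1)) by (apply Rinv_0_lt_compat; lra); lra).
  assert (Hfloor : forall k x, int_hmin + del <= k -> r0 <= x <= r1 -> m <= 2 * (k + / x)).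
  { intros k x Hk Hx.
    assert (/ r1 <= / x) by (apply Rinv_le_contravar; lra).
    assert (- 3 / (4 * r1) + / r1 = / (4 * r1)) by (field; lra).
    unfold m, int_hmin in *; lra. }
  assert (Hhm : int_hmin < h) by lra; assert (Hh0m : int_hmin < h0) by lra.
  unfold int_T, int_time.
  rewrite <- (@RInt_minus R_CompleteNormedModule) by (apply int_dt_integrable; (assumption || lra)).
  apply abs_RInt_le_const; [lra | |].
  - apply (@ex_RInt_minus R_NormedModule (int_dt h) (int_dt h0)); apply int_dt_integrable; lra.
  - intros x Hx; unfold int_dt.
    eapply Rle_trans; [apply (inv_sqrt_lipschitz _ _ m Hm); apply Hfloor; lra |].
    replace (2 * (h + / x) - 2 * (h0 + / x)) with (2 * (h - h0)) by ring.
    rewrite Rabs_mult, (Rabs_pos_eq 2) by lra; lra.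
Qed.

Lemma int_T_cont h0 : int_hmin < h0 -> continuity_pt int_T h0.
Proof.
  intros Hh0 eps Heps.
  set (del := (h0 - int_hmin) / 2); assert (Hdel : 0 < del) by (unfold del; lra).
  set (m := 2 * (del + / (4 * r1))).
  assert (Hm : 0 < m) by (unfold m; assert (0 < / (4 * r1)) by (apply Rinv_0_lt_compat; lra); lra).
  assert (Hsm : 0 < sqrt m) by (apply sqrt_lt_R0; lra).
  set (K := (r1 - r0) * 2 / (2 * m * sqrt m)).
  assert (HK : 0 < K) by (unfold K; apply Rdiv_lt_0_compat; [lra | apply Rmult_lt_0_compat; lra]).
  exists (Rmin del (eps / K)); split; [apply Rmin_pos; [| apply Rdiv_lt_0_compat]; assumption |].
  intros h [_ Hdist]; unfold R_dist in *; simpl in *.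
  assert (Hd1 : Rabs (h - h0) < del) by (eapply Rlt_le_trans; [exact Hdist | apply Rmin_l]).
  assert (Hd2 : Rabs (h - h0) < eps / K) by (eapply Rlt_le_trans; [exact Hdist | apply Rmin_r]).
  apply Rabs_def2 in Hd1.
  eapply Rle_lt_trans; [apply (int_T_lipschitz del); unfold del in *; lra |].
  fold m; replace ((r1 - r0) * (2 * Rabs (h - h0) / (2 * m * sqrt m))) with (K * Rabs (h - h0))
    by (unfold K; field; lra).
  apply (Rmult_lt_compat_l K) in Hd2; [| exact HK].
  replace (K * (eps / K)) with eps in Hd2 by (field; lra); exact Hd2.
Qed.

Lemma int_T_le_const H : 0 < H -> int_T H <= (r1 - r0) / sqrt (2 * H).
Proof.
  intros HH.
  assert (Hhm : int_hmin < H)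
    by (unfold int_hmin; assert (0 < 3 / (4 * r1)) by (apply Rdiv_lt_0_compat; lra);
        unfold Rdiv in *; lra).
  assert (HsH : 0 < sqrt (2 * H)) by (apply sqrt_lt_R0; lra).
  unfold int_T, int_time.
  replace ((r1 - r0) / sqrt (2 * H)) with (RInt (fun _ => / sqrt (2 * H)) r0 r1)
    by (rewrite RInt_const; unfold scal; simpl; unfold mult; simpl; field; lra).
  apply RInt_le; [lra | apply int_dt_integrable; lra | apply ex_RInt_const |].
  intros x Hx; unfold int_dt; apply Rinv_le_contravar; [exact HsH |].
  apply sqrt_le_1_alt; assert (0 < / x) by (apply Rinv_0_lt_compat; lra); lra.
Qed.

Lemma int_solution h : int_hmin < h ->
  exists r w, solves_radial_bvp r w r0 r1 (int_T h).
Proof.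
  intros Hh; set (lb := r0 / 2); set (ub := 7 * r1 / 6).
  assert (Hlu : lb < ub) by (unfold lb, ub; lra).
  assert (Hdom : forall u, lb <= u <= ub -> 0 < u < 4 * r1 / 3)
    by (intros u Hu; unfold lb, ub in Hu; lra).
  assert (HTh : forall u, lb <= u <= ub ->
            derivable_pt_lim (int_time h) u (int_dt h u) /\ 0 < int_dt h u)
    by (intros u Hu; split; [apply dl_int_time | apply int_dt_pos]; auto).
  set (W := fun u => sqrt (2 * (h + / u))).
  assert (HP : forall u, lb <= u <= ub -> 0 < u /\
      derivable_pt_lim (fun x => x) u (W u * int_dt h u) /\
      derivable_pt_lim W u (- int_dt h u / u ^ 2)).
  { intros u Hu; pose proof (Hdom u Hu); pose proof (int_domain h u Hh (Hdom u Hu)) as Hg.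
    assert (Hs : 0 < sqrt (2 * (h + / u))) by (apply sqrt_lt_R0; lra).
    split; [lra | split].
    - eapply dl_eq; [apply derivable_pt_lim_id | unfold W, int_dt; field; lra].
    - unfold W, int_dt; apply is_derive_Reals; auto_derive;
        [repeat split; [apply Rgt_not_eq |]; lra | field; lra]. }
  assert (Hstart : int_time h r0 = 0) by apply int_time_r0.
  exists (inv_time (int_time h) lb ub), (fun t => W (inv_time (int_time h) lb ub t)),
    (int_time h lb), (int_time h ub).
  split; [| split; [| split; [| split]]].
  - rewrite <- Hstart; apply (time_incr _ _ lb ub HTh); unfold lb, ub; lra.
  - apply (time_incr _ _ lb ub HTh); unfold lb, ub; lra.
  - intros t Ht.
    exact (reparam_radial_motion (int_time h) (int_dt h) (fun x => x) W lb ub Hlu HTh HP t Ht).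
  - rewrite <- Hstart; apply (inv_time_time _ _ lb ub Hlu HTh); unfold lb, ub; lra.
  - apply (inv_time_time _ _ lb ub Hlu HTh); unfold lb, ub; lra.
Qed.

End OutwardMotion.

Section RadialExistence.
Variables r0 r1 : R.
Hypothesis Hr0 : 0 < r0.
Hypothesis Hr01 : r0 < r1.

Lemma ell_a_PI2 : ell_a r1 (PI / 2) = r1.
Proof. unfold ell_a; rewrite cos_PI2; field. Qed.

Lemma PI2_anomaly : 0 < PI / 2 < 2 * PI.
Proof. pose proof PI_RGT_0; lra. Qed.

Lemma int_hmin_lt : int_hmin r1 < - / (2 * r1).
Proof.
  assert (0 < / r1) by (apply Rinv_0_lt_compat; lra).
  unfold int_hmin; replace (- 3 / (4 * r1)) with (- (3 / 4) * / r1) by (field; lra).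
  replace (- / (2 * r1)) with (- (1 / 2) * / r1) by (field; lra); lra.
Qed.

(* On the ellipse through r1 at anomaly PI / 2 (energy -1/(2 r1)), dr/dt = sqrt (2 (h + 1/r)). *)
Lemma ell_speed_PI2 u : ell_uA r0 r1 (PI / 2) <= u <= PI / 2 ->
  int_dt (- / (2 * r1)) (ell_radius r1 (PI / 2) u) * ell_speed r1 (PI / 2) u = 1.
Proof.
  intros Hu; pose proof PI_RGT_0.
  pose proof (ell_window r0 r1 Hr0 Hr01 _ PI2_anomaly) as (W1 & W2 & W3 & W4 & W5).
  assert (Hw : ell_uA r0 r1 (PI / 2) / 2 <= u <= (PI / 2 + 2 * PI) / 2) by lra.
  pose proof (ell_energy r0 r1 Hr0 Hr01 _ PI2_anomaly u Hw) as En; rewrite ell_a_PI2 in En.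
  destruct (ell_radius_derive r0 r1 Hr0 Hr01 _ PI2_anomaly u Hw) as [Hr _].
  assert (Hspeed : 0 < ell_speed r1 (PI / 2) u).
  { unfold ell_speed; rewrite ell_a_PI2; apply Rdiv_lt_0_compat; [apply sin_gt_0; lra |].
    apply Rmult_lt_0_compat; [apply sqrt_lt_R0; lra | apply one_minus_cos_pos; lra]. }
  unfold int_dt.
  replace (2 * (- / (2 * r1) + / ell_radius r1 (PI / 2) u))
    with (ell_speed r1 (PI / 2) u * ell_speed r1 (PI / 2) u) by (unfold Rdiv in En; lra).
  rewrite sqrt_square by lra; field; lra.
Qed.

(* Both families contain the motion of energy -1/(2 r1) reaching r1 at anomaly PI / 2. *)
Lemma int_T_ell_T : int_T r0 r1 (- / (2 * r1)) = ell_T r0 r1 (PI / 2).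
Proof.
  pose proof PI_RGT_0 as HPI.
  pose proof (ell_window r0 r1 Hr0 Hr01 _ PI2_anomaly) as (W1 & W2 & W3 & W4 & W5).
  set (uA := ell_uA r0 r1 (PI / 2)) in *.
  set (F := fun u =>
    int_time r0 (- / (2 * r1)) (ell_radius r1 (PI / 2) u) - ell_time r0 r1 (PI / 2) u).
  assert (HF : forall u, uA <= u <= PI / 2 -> derivable_pt_lim F u 0).
  { intros u Hu.
    assert (Hw : ell_uA r0 r1 (PI / 2) / 2 <= u <= (PI / 2 + 2 * PI) / 2) by (unfold uA in *; lra).
    destruct (ell_radius_derive r0 r1 Hr0 Hr01 _ PI2_anomaly u Hw) as (Hr & Hrd & _).
    destruct (ell_time_derive r0 r1 Hr0 Hr01 _ PI2_anomaly u Hw) as [Htd _].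
    assert (Hr1 : ell_radius r1 (PI / 2) u <= r1).
    { unfold ell_radius; rewrite ell_a_PI2; assert (0 <= cos u) by (apply cos_ge_0; lra); nra. }
    assert (Hi := dl_int_time r0 r1 Hr0 Hr01 _ (ell_radius r1 (PI / 2) u) int_hmin_lt ltac:(lra)).
    eapply dl_eq;
      [exact (derivable_pt_lim_minus _ _ u _ _ (derivable_pt_lim_comp _ _ u _ _ Hrd Hi) Htd) |].
    rewrite <- Rmult_assoc, ell_speed_PI2 by (unfold uA in *; lra); ring. }
  assert (HFc := derivable_pt_lim_0_const F uA (PI / 2) HF (PI / 2) ltac:(lra)).
  unfold F, ell_radius, uA in HFc.
  rewrite ell_time_A, ell_time_B, (ell_radius_A r0 r1 Hr0 Hr01 _ PI2_anomaly),
    (ell_radius_B r1 _ PI2_anomaly), int_time_r0 in HFc.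
  unfold int_T; lra.
Qed.

Lemma radial_bvp_exists_short T : 0 < T -> T <= int_T r0 r1 (- / (2 * r1)) ->
  exists r w, solves_radial_bvp r w r0 r1 T.
Proof.
  intros HT Hle.
  set (c := (r1 - r0) / T); assert (Hc : 0 < c) by (unfold c; apply Rdiv_lt_0_compat; lra).
  assert (HH : 0 < c * c) by nra.
  assert (Hsmall : int_T r0 r1 (c * c) < T).
  { eapply Rle_lt_trans; [apply (int_T_le_const r0 r1 Hr0 Hr01 _ HH) |].
    assert (sqrt (c * c) = c) by (apply sqrt_square; lra).
    assert (sqrt (c * c) < sqrt (2 * (c * c))) by (apply sqrt_lt_1_alt; lra).
    apply (Rmult_lt_reg_r (sqrt (2 * (c * c)))); [lra |].
    assert (Hct : r1 - r0 = c * T) by (unfold c; field; lra).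
    replace ((r1 - r0) / sqrt (2 * (c * c)) * sqrt (2 * (c * c))) with (c * T)
      by (rewrite <- Hct; field; lra).
    nra. }
  assert (Hh1 : - / (2 * r1) < c * c)
    by (assert (0 < / (2 * r1)) by (apply Rinv_0_lt_compat; lra); lra).
  pose proof int_hmin_lt.
  assert (Hex : exists h, int_hmin r1 < h /\ int_T r0 r1 h = T).
  { destruct Hle as [Hlt | Heq]; [| exists (- / (2 * r1)); split; [lra | exact (eq_sym Heq)]].
    destruct (IVT_interv (fun h => T - int_T r0 r1 h) (- / (2 * r1)) (c * c)) as [h [Hh Hz]];
      [| lra | simpl; lra | simpl; lra |].
    - intros a Ha; apply continuity_pt_minus; [apply continuity_pt_cst |].
      apply (int_T_cont r0 r1 Hr0 Hr01); lra.
    - exists h; simpl in Hz; split; lra. }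
  destruct Hex as [h [Hh <-]]; exact (int_solution r0 r1 Hr0 Hr01 h Hh).
Qed.

Lemma ell_T_cont x : 0 < x < 2 * PI -> continuity_pt (ell_T r0 r1) x.
Proof.
  intros Hx; pose proof (ell_a_pos r0 r1 Hr0 Hr01 x Hx) as Ha.
  pose proof (one_minus_cos_pos x Hx).
  assert (Hac : continuity_pt (ell_a r1) x).
  { unfold ell_a; apply continuity_pt_div; [apply continuity_pt_cst | | lra].
    apply continuity_pt_minus; [apply continuity_pt_cst | apply continuity_cos]. }
  assert (Huc : continuity_pt (ell_uA r0 r1) x).
  { unfold ell_uA; apply (continuity_pt_comp (fun s => 1 - r0 / ell_a r1 s) acos).
    - apply continuity_pt_minus; [apply continuity_pt_cst |].
      apply continuity_pt_div; [apply continuity_pt_cst | exact Hac | lra].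
    - apply derivable_continuous_pt, derivable_pt_acos, (ell_cos_uA_range r0 r1 Hr0 Hr01 x Hx). }
  unfold ell_T; apply continuity_pt_mult; [apply continuity_pt_mult; [exact Hac |] |].
  - apply (continuity_pt_comp (ell_a r1) sqrt); [exact Hac | apply continuity_pt_sqrt; lra].
  - apply continuity_pt_minus; apply continuity_pt_minus.
    + apply derivable_continuous_pt, derivable_pt_id.
    + apply continuity_sin.
    + exact Huc.
    + apply (continuity_pt_comp (ell_uA r0 r1) sin); [exact Huc | apply continuity_sin].
Qed.
Lemma ell_T_ge s : 3 * (PI / 2) <= s < 2 * PI ->
  ell_a r1 s * sqrt (ell_a r1 s) * PI <= ell_T r0 r1 s.
Proof.
  intros Hs; pose proof PI_RGT_0; assert (Hs' : 0 < s < 2 * PI) by lra.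
  pose proof (ell_a_pos r0 r1 Hr0 Hr01 s Hs') as Ha; pose proof (one_minus_cos_pos s Hs').
  pose proof (ell_uA_range r0 r1 Hr0 Hr01 s Hs') as HuA.
  assert (Hcos : 0 <= cos s) by (apply cos_ge_0_3PI2; lra).
  assert (Hfar : r0 < ell_a r1 s).
  { apply Rlt_le_trans with r1; [exact Hr01 |].
    rewrite <- (ell_radius_B r1 s Hs') at 1; nra. }
  assert (HcuA : 0 < cos (ell_uA r0 r1 s)).
  { rewrite (cos_ell_uA r0 r1 Hr0 Hr01 s Hs').
    assert (r0 / ell_a r1 s < 1); [| lra].
    apply (Rmult_lt_reg_r (ell_a r1 s)); [lra |].
    replace (r0 / ell_a r1 s * ell_a r1 s) with r0 by (field; lra); lra. }
  assert (HuA2 : ell_uA r0 r1 s <= PI / 2).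
  { destruct (Rle_or_lt (ell_uA r0 r1 s) (PI / 2)) as [| Hgt]; [assumption |].
    assert (cos (ell_uA r0 r1 s) < cos (PI / 2)) by (apply cos_decreasing_1; lra).
    rewrite cos_PI2 in *; lra. }
  assert (sin s <= 0) by (apply sin_le_0; lra).
  assert (0 <= sin (ell_uA r0 r1 s)) by (apply sin_ge_0; lra).
  unfold ell_T; apply Rmult_le_compat_l; [| lra].
  apply Rmult_le_pos; [lra | apply sqrt_pos].
Qed.

Lemma ell_a_unbounded K : exists s, 3 * (PI / 2) <= s < 2 * PI /\ K < ell_a r1 s.
Proof.
  pose proof PI_RGT_0.
  set (K' := Rmax K 1).
  assert (HK : K <= K') by apply Rmax_l; assert (HK1 : 1 <= K') by apply Rmax_r.
  assert (Heps : 0 < r1 / K') by (apply Rdiv_lt_0_compat; lra).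
  destruct (continuity_cos (2 * PI) (r1 / K') Heps) as [del [Hdel Hc]].
  set (s := 2 * PI - Rmin (del / 2) (PI / 2)).
  assert (0 < Rmin (del / 2) (PI / 2)) by (apply Rmin_pos; lra).
  assert (Rmin (del / 2) (PI / 2) <= del / 2) by apply Rmin_l.
  assert (Rmin (del / 2) (PI / 2) <= PI / 2) by apply Rmin_r.
  exists s; split; [unfold s; lra |].
  assert (Hs : 0 < s < 2 * PI) by (unfold s; lra).
  assert (Hcs : Rabs (cos s - 1) < r1 / K').
  { rewrite <- cos_2PI; apply Hc; split; [split; [exact I | unfold s; lra] |].
    simpl; unfold R_dist, s; rewrite Rabs_left; lra. }
  apply Rabs_def2 in Hcs; pose proof (one_minus_cos_pos s Hs).
  apply Rle_lt_trans with K'; [exact HK |].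
  unfold ell_a; apply (Rmult_lt_reg_r (1 - cos s)); [lra |].
  replace (r1 / (1 - cos s) * (1 - cos s)) with r1 by (field; lra).
  apply (Rmult_lt_reg_l (/ K')); [apply Rinv_0_lt_compat; lra |].
  replace (/ K' * (K' * (1 - cos s))) with (1 - cos s) by (field; lra).
  unfold Rdiv in Hcs; lra.
Qed.

Lemma ell_T_unbounded M : exists s, PI / 2 < s < 2 * PI /\ M < ell_T r0 r1 s.
Proof.
  pose proof PI_RGT_0.
  destruct (ell_a_unbounded (Rmax 1 (M / PI))) as [s [Hs Ha]].
  assert (1 <= Rmax 1 (M / PI)) by apply Rmax_l; assert (M / PI <= Rmax 1 (M / PI)) by apply Rmax_r.
  exists s; split; [lra |].
  assert (Hsa : 1 <= sqrt (ell_a r1 s)) by (rewrite <- sqrt_1; apply sqrt_le_1_alt; lra).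
  apply Rlt_le_trans with (ell_a r1 s * sqrt (ell_a r1 s) * PI); [| apply ell_T_ge; lra].
  replace M with (M / PI * PI) by (field; lra).
  apply Rmult_lt_compat_r; [lra |]; nra.
Qed.

Lemma radial_bvp_exists_long T : ell_T r0 r1 (PI / 2) < T ->
  exists r w, solves_radial_bvp r w r0 r1 T.
Proof.
  intros HT; destruct (ell_T_unbounded T) as [sb [Hsb HTsb]].
  destruct (IVT_interv (fun s => ell_T r0 r1 s - T) (PI / 2) sb) as [s [Hs Hz]];
    [| lra | simpl; lra | simpl; lra |].
  - intros a Ha; apply continuity_pt_minus; [apply ell_T_cont; pose proof PI_RGT_0; lra |].
    apply continuity_pt_cst.
  - simpl in Hz; replace T with (ell_T r0 r1 s) by lra.
    eexists; eexists; apply ell_solution; pose proof PI_RGT_0; lra.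
Qed.

Lemma radial_bvp_exists_outward T : 0 < T -> exists r w, solves_radial_bvp r w r0 r1 T.
Proof.
  intros HT; destruct (Rle_or_lt T (ell_T r0 r1 (PI / 2))) as [Hle | Hgt].
  - apply radial_bvp_exists_short; [exact HT | rewrite int_T_ell_T; exact Hle].
  - apply radial_bvp_exists_long, Hgt.
Qed.

End RadialExistence.

Lemma radial_bvp_exists r0 r1 T : 0 < r0 -> 0 < r1 -> r0 <> r1 -> 0 < T ->
  exists r w, solves_radial_bvp r w r0 r1 T.
Proof.
  intros H0 H1 Hne HT; destruct (Rlt_or_le r0 r1) as [Hlt | Hge].
  - exact (radial_bvp_exists_outward r0 r1 H0 Hlt T HT).
  - destruct (radial_bvp_exists_outward r1 r0 H1 ltac:(lra) T HT)
      as (r & w & al & be & Hal & Hbe & Hsol & E0 & ET).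
    exists (fun t => r (T - t)), (fun t => - w (T - t)), (T - be), (T - al).
    split; [lra | split; [lra | split; [| split]]].
    + intros t Ht; destruct (Hsol (T - t) ltac:(lra)) as (P & Q & U).
      split; [exact P | split; [exact (dl_reflect r T t _ Q) |]].
      eapply dl_eq; [apply (derivable_pt_lim_opp (fun x => w (T - x))), dl_reflect, U | ring].
    + rewrite Rminus_0_r; exact ET.
    + rewrite Rminus_diag; exact E0.
Qed.


(** * Rectilinear arcs *)

Lemma sumR_affine n (w : nat -> R) (a b : R) (r : nat -> R) :
  sumR n (fun k => w k * (a + r k * b)) = a * sumR n w + b * sumR n (fun k => w k * r k).
Proof. induction n as [| n IH]; simpl; [ring | rewrite IH; ring]. Qed.

Lemma sumR_nonneg n (f : nat -> R) : (forall k, (k < n)%nat -> 0 <= f k) -> 0 <= sumR n f.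
Proof.
  induction n as [| n IH]; intros H; simpl; [lra |].
  assert (0 <= f n) by (apply H; lia).
  assert (0 <= sumR n f) by (apply IH; intros k Hk; apply H; lia); lra.
Qed.

Lemma sumR_pos n (w r : nat -> R) : (forall k, (k < n)%nat -> 0 <= w k /\ 0 < r k) ->
  0 < sumR n w -> 0 < sumR n (fun k => w k * r k).
Proof.
  induction n as [| n IH]; intros H Hs; simpl in *; [lra |].
  destruct (H n ltac:(lia)) as [Hw Hr].
  destruct (Rle_or_lt (sumR n w) 0) as [Hle | Hlt].
  - assert (0 <= sumR n (fun k => w k * r k))
      by (apply sumR_nonneg; intros k Hk; destruct (H k ltac:(lia)); nra).
    assert (0 < w n * r n) by (apply Rmult_lt_0_compat; lra); lra.
  - assert (0 < sumR n (fun k => w k * r k)) by (apply IH; [intros k Hk; apply H; lia | exact Hlt]).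
    assert (0 <= w n * r n) by nra; lra.
Qed.

Section RadialArc.
Variable d : nat.
Hypothesis Hd : (d = 2 \/ d = 3)%nat.
Variables O A : pt.
Hypothesis HO : inR d O.
Hypothesis HA : inR d A.
Hypothesis HnA : 0 < norm d (vsub A O).

Definition ray_motion (r : R -> R) (t : R) : pt := fun i => O i + r t * uvec d O A i.

Lemma inR_ray_motion r t : inR d (ray_motion r t).
Proof. intros i Hi; unfold ray_motion; rewrite HO, (inR_uvec d O A HO HA) by exact Hi; ring. Qed.

Lemma norm_ray_motion r t : 0 < r t -> norm d (vsub (ray_motion r t) O) = r t.
Proof.
  intros Hr; rewrite (norm_coords d Hd _ (inR_vsub d _ _ (inR_ray_motion r t) HO)).
  unfold vsub, ray_motion.
  replace (sqnorm3 _ _ _)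
    with (r t * r t * sqnorm3 (uvec d O A 0%nat) (uvec d O A 1%nat) (uvec d O A 2%nat))
    by (unfold sqnorm3; ring).
  rewrite (uvec_unit d Hd O A HO HA HnA), Rmult_1_r; apply sqrt_square; lra.
Qed.

Lemma ray_motion_kepler r w al be T : al < 0 -> 0 < T -> T < be ->
  (forall t, al < t < be -> radial_motion r w t) -> KeplerArc d O (ray_motion r) 0 (0 + T).
Proof.
  intros Hal HT Hbe Hsol.
  split; [lra | split; [exact (inR_ray_motion r) |]].
  exists al, be, (fun t i => w t * uvec d O A i), (radial_energy r w 0).
  split; [lra | split; [lra | split; [| split; [| split; [| split]]]]].
  - intros t Ht i Hi; destruct (Hsol t Ht) as (_ & Q & _).
    apply (continuity_pt_of_dl _ _ (0 + w t * uvec d O A i)), derivable_pt_lim_plus;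
      [apply derivable_pt_lim_const | apply dl_mult_const, Q].
  - intros t Ht Hn i Hi; destruct (Hsol t Ht) as (P & Q & U); rewrite norm_ray_motion by exact P.
    split.
    + apply (dl_eq _ _ (0 + w t * uvec d O A i)); [| ring].
      apply derivable_pt_lim_plus; [apply derivable_pt_lim_const | apply dl_mult_const, Q].
    + eapply dl_eq; [apply dl_mult_const, U | unfold ray_motion; field; lra].
  - intros t Ht Hn; destruct (Hsol t Ht) as (P & _).
    rewrite norm_ray_motion by exact P.
    rewrite <- (radial_energy_const r w al be Hsol t 0 Ht ltac:(lra)); unfold radial_energy.
    rewrite (dot_coords d Hd) by (intros i Hi; rewrite (inR_uvec d O A HO HA) by exact Hi; ring).
    replace (w t * uvec d O A 0%nat * (w t * uvec d O A 0%nat) +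
             w t * uvec d O A 1%nat * (w t * uvec d O A 1%nat) +
             w t * uvec d O A 2%nat * (w t * uvec d O A 2%nat))
      with (w t * w t * sqnorm3 (uvec d O A 0%nat) (uvec d O A 1%nat) (uvec d O A 2%nat))
      by (unfold sqnorm3; ring).
    rewrite (uvec_unit d Hd O A HO HA HnA); lra.
  - intros t0 Ht0 Hn; exfalso; destruct (Hsol t0 Ht0) as (P & _).
    rewrite norm_ray_motion in Hn by exact P; lra.
  - intros [t0 [Ht0 Hn]]; exfalso; destruct (Hsol t0 Ht0) as (P & _).
    rewrite norm_ray_motion in Hn by exact P; lra.
Qed.

Lemma ray_motion_direct r tA tB : (forall t, tA <= t <= tB -> 0 < r t) ->
  DirectArc d O (ray_motion r) tA tB.
Proof.
  intros Hr [n [wt [ts [Hw [Hsw Hsum]]]]].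
  assert (Hnz : exists i, (i < d)%nat /\ A i - O i <> 0).
  { rewrite (norm_AO d Hd O A HO HA) in HnA; apply sqnorm3_pos_of_sqrt in HnA.
    destruct (Req_dec (A 0%nat - O 0%nat) 0) as [E0 | E0];
      [| exists 0%nat; split; [lia | exact E0]].
    destruct (Req_dec (A 1%nat - O 1%nat) 0) as [E1 | E1];
      [| exists 1%nat; split; [lia | exact E1]].
    exists 2%nat; split; [destruct Hd as [-> | ->]; [| lia] |].
    - exfalso; rewrite E0, E1, (HA 2%nat), (HO 2%nat) in HnA by lia; unfold sqnorm3 in HnA; lra.
    - intros E2; rewrite E0, E1, E2 in HnA; unfold sqnorm3 in HnA; lra. }
  destruct Hnz as [i [Hi Hai]]; specialize (Hsum i Hi); unfold ray_motion in Hsum.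
  rewrite sumR_affine, Hsw in Hsum.
  assert (Hpos : 0 < sumR n (fun k => wt k * r (ts k)))
    by (apply sumR_pos; [intros k Hk; destruct (Hw k Hk); split; [| apply Hr]; assumption | lra]).
  assert (Hui : uvec d O A i = 0)
    by (apply (Rmult_eq_reg_r (sumR n (fun k => wt k * r (ts k)))); lra).
  apply Hai; unfold uvec in Hui.
  apply (Rmult_eq_reg_r (/ norm d (vsub A O))); [unfold Rdiv in Hui; lra |].
  apply Rgt_not_eq, Rinv_0_lt_compat, HnA.
Qed.

Lemma ray_scale_ne_1 B s : inR d B -> 0 < norm d (vsub A B) ->
  (forall i, (i < d)%nat -> B i - O i = s * (A i - O i)) -> s <> 1.
Proof.
  intros HB HAB HBs ->.
  assert (E := coords3_of_lt_d d eq A B eq_refl HA HB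
                 ltac:(intros i Hi; specialize (HBs i Hi); lra)).
  rewrite (norm_coords d Hd _ (inR_vsub d _ _ HA HB)) in HAB; unfold vsub in HAB.
  rewrite !E, !Rminus_diag in HAB by lia; unfold sqnorm3 in HAB.
  rewrite Rmult_0_l, !Rplus_0_l, sqrt_0 in HAB; lra.
Qed.

Lemma direct_rectilinear_arc_exists B T s : inR d B -> 0 < T -> 0 < s -> s <> 1 ->
  (forall i, (i < d)%nat -> B i - O i = s * (A i - O i)) ->
  exists q tA, ArcFromTo d O A B q tA T /\ DirectArc d O q tA (tA + T) /\
    Rectilinear d O q tA (tA + T).
Proof.
  intros HB HT Hs Hs1 HBs.
  assert (Hne : norm d (vsub A O) <> s * norm d (vsub A O))
    by (intros E; apply Hs1, (Rmult_eq_reg_r (norm d (vsub A O))); lra).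
  destruct (radial_bvp_exists (norm d (vsub A O)) (s * norm d (vsub A O)) T HnA
              ltac:(nra) Hne HT) as (r & w & al & be & Hal & Hbe & Hsol & Hr0 & HrT).
  assert (HuA : forall i, norm d (vsub A O) * uvec d O A i = A i - O i)
    by (intros i; unfold uvec; field; lra).
  exists (ray_motion r), 0; split; [split; [| split] | split].
  - exact (ray_motion_kepler r w al be T Hal HT Hbe Hsol).
  - intros i Hi; unfold ray_motion; rewrite Hr0, HuA; ring.
  - intros i Hi; unfold ray_motion; rewrite Rplus_0_l, HrT, Rmult_assoc, HuA.
    specialize (HBs i Hi); lra.
  - apply ray_motion_direct; intros t Ht; apply Hsol; lra.
  - exists (uvec d O A); split; [exact (inR_uvec d O A HO HA) |].
    split; [| intros t Ht; exists (r t); intros i Hi; reflexivity].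
    rewrite (norm_coords d Hd _ (inR_uvec d O A HO HA)), (uvec_unit d Hd O A HO HA HnA), sqrt_1.
    lra.
Qed.

End RadialArc.

Theorem mainTheorem4 (d : nat) (O A B : pt) :
  (d = 2 \/ d = 3)%nat ->
  inR d O -> inR d A -> inR d B ->
  0 < norm d (vsub A O) -> 0 < norm d (vsub B O) -> 0 < norm d (vsub A B) ->
  (exists s : R, 0 < s /\ forall i, (i < d)%nat -> B i - O i = s * (A i - O i)) ->
  forall T : R, 0 < T ->
    (exists (q : R -> pt) (tA : R),
        ArcFromTo d O A B q tA T /\ DirectArc d O q tA (tA + T) /\
        Rectilinear d O q tA (tA + T)) /\
    (forall (q1 q2 : R -> pt) (t1 t2 : R),
        ArcFromTo d O A B q1 t1 T -> DirectArc d O q1 t1 (t1 + T) ->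
        ArcFromTo d O A B q2 t2 T -> DirectArc d O q2 t2 (t2 + T) ->
        forall s, 0 <= s <= T -> eqpt d (q1 (t1 + s)) (q2 (t2 + s))).
Proof.
  intros Hd HO HA HB HnA _ HAB [s [Hs HBs]] T HT; split.
  - apply (direct_rectilinear_arc_exists d Hd O A HO HA HnA B T s); try assumption.
    apply (ray_scale_ne_1 d Hd O A HA B); assumption.
  - intros q1 q2 t1 t2 H1 D1 H2 D2.
    apply (direct_arcs_agree d Hd O A HO HA HnA B q1 q2 t1 t2 T s); assumption.
Qed.
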